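(* Let $\Theta$ be a set of session type variables. The asynchronous subtyping relation $<:_\Theta$ satisfies the following (whenever the premises hold, so does the conclusion; all types are assumed to be session types over the indicated sets of variables): (i) (reflexivity) $T <:_\Theta T$; (ii) (transitivity) if $S <:_\Theta T$ and $T <:_\Theta U$ then $S <:_\Theta U$; (iii) if $J \subseteq I$ and $T_i <:_\Theta U_i$ for all $i\in J$, then $\oplus_{i\in J}\, p!\ell_i(\mathsf b_i).T_i <:_\Theta \oplus_{i\in I}\, p!\ell_i(\mathsf b_i).U_i$; (iv) if $J\subseteq I$ and $T_i <:_\Theta U_i$ for all $i \in J$, then $\&_{i\in I}\, p?\ell_i(\mathsf b_i).T_i <:_\Theta \&_{i\in J}\, p?\ell_i(\mathsf b_i).U_i$; (v) if $X\notin \Theta$ and $T <:_{\Theta\cup\{X\}} U$, then $\mu X.T <:_\Theta \mu X.U$; (vi) if $T <:_{\{X_1,\dots,X_n\}} U$ and $T_k <:_\Theta U_k$ for $k=1,\dots,n$, then $T[X_1\mapsto T_1,\dots,X_n\mapsto T_n] <:_\Theta U[X_1\mapsto U_1,\dots,X_n\mapsto U_n]$.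
   Context: Fix a set $\mathcal L$ of labels and a set of participants $p,q,r,\dots$. Ground types are $\mathsf b \in \{\mathsf{unit},\mathsf{bool},\mathsf{int}\}$. Session types are generated by $T ::= \mathsf{end} \mid \oplus_{i\in I}\, p!\ell_i(\mathsf b_i).T_i \mid \&_{i\in I}\, p?\ell_i(\mathsf b_i).T_i \mid X \mid \mu X.T$, where $X$ ranges over session type variables, $I$ is finite and non-empty, the labels $\ell_i\in\mathcal L$ are pairwise distinct, $\mu X$ binds $X$, and recursion is guarded (every occurrence of $X$ in $T$ lies inside an internal choice $\oplus$ or external choice $\&$). A single-branch choice is written $p!\ell(\mathsf b).T$ or $p?\ell(\mathsf b).T$. A session type is over $\Theta$ if all its free type variables lie in $\Theta$; closed if it has none. Unfolding: $\mathrm{unf}(\mu X.T) = \mathrm{unf}(T)[X\mapsto \mu X.T]$ and $\mathrm{unf}(T)=T$ if $T$ is not of the form $\mu X.T'$. Four inductively defined relations/predicates (smallest closed under the rules): (a) $U \hookrightarrow^{p!\ell(\mathsf b)} U'$: (base) $\oplus_{i\in I} p!\ell_i(\mathsf b_i).U_i \hookrightarrow^{p!\ell_j(\mathsf b_j)} U_j$ for $j\in I$; (⊕) if $p\neq q$, $J\subseteq I$, and $U_i\hookrightarrow^{p!\ell(\mathsf b)}U_i'$ for all $i\in J$, then $\oplus_{i\in I} q!\ell_i'(\mathsf b_i').U_i \hookrightarrow^{p!\ell(\mathsf b)} \oplus_{i\in J} q!\ell_i'(\mathsf b_i').U_i'$; (&) if $U_i\hookrightarrow^{p!\ell(\mathsf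 b)}U_i'$ for all $i\in I$, then $\&_{i\in I} q?\ell_i'(\mathsf b_i').U_i \hookrightarrow^{p!\ell(\mathsf b)} \&_{i\in I} q?\ell_i'(\mathsf b_i').U_i'$ (here $q$ may equal $p$); (rec) if $U[X\mapsto\mu X.U]\hookrightarrow^{p!\ell(\mathsf b)}U'$ then $\mu X.U\hookrightarrow^{p!\ell(\mathsf b)}U'$. (b) $\mathrm{Sends}_p(T)$: $\mathrm{Sends}_p(\oplus_{i\in I} p!\ell_i(\mathsf b_i).T_i)$; if $\mathrm{Sends}_p(T_j)$ for all $j\in J$ then $\mathrm{Sends}_p(\oplus_{j\in J} q!\ell_j(\mathsf b_j).T_j)$; if $\mathrm{Sends}_p(T)$ then $\mathrm{Sends}_p(\mu X.T)$. (c) $T\hookrightarrow^{p?\ell(\mathsf b)}T'$: the duals of (a): (base) $\&_{i\in I} p?\ell_i(\mathsf b_i).T_i \hookrightarrow^{p?\ell_j(\mathsf b_j)} T_j$; (&) if $p\ne q$, $J\subseteq I$, $T_i\hookrightarrow^{p?\ell(\mathsf b)}T_i'$ for $i\in J$, then $\&_{i\in I} q?\ell_i'(\mathsf b_i').T_i\hookrightarrow^{p?\ell(\mathsf b)}\&_{i\in J} q?\ell_i'(\mathsf b_i').T_i'$; (⊕) if $T_i\hookrightarrow^{p?\ell(\mathsf b)}T_i'$ for all $i\in I$, then $\oplus_{i\in I} q!\ell_i'(\mathsf b_i').T_i\hookrightarrow^{p?\ell(\mathsf b)}\oplus_{i\in I} q!\ell_i'(\mathsf b_i').T_i'$; (rec)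 as in (a). (d) $\mathrm{Recvs}_p(U)$: $\mathrm{Recvs}_p(\&_{i\in I} p?\ell_i(\mathsf b_i).U_i)$; if $\mathrm{Recvs}_p(U_j)$ for all $j\in J$ then $\mathrm{Recvs}_p(\&_{j\in J} q?\ell_j(\mathsf b_j).U_j)$; if $\mathrm{Recvs}_p(U)$ then $\mathrm{Recvs}_p(\mu X.U)$. Asynchronous subtyping $<:_\Theta$ is the largest binary relation on session types over $\Theta$ such that whenever $T <:_\Theta U$: (1) if $\mathrm{unf}(T)=\oplus_{i\in I}p!\ell_i(\mathsf b_i).T_i$ then for every $i\in I$ there is $U_i$ with $U\hookrightarrow^{p!\ell_i(\mathsf b_i)}U_i$ and $T_i<:_\Theta U_i$; (2) if $\mathrm{unf}(T)=\&_{i\in I}p?\ell_i(\mathsf b_i).T_i$ then $\mathrm{Recvs}_p(U)$; (3) if $\mathrm{unf}(U)=\oplus_{i\in I}p!\ell_i(\mathsf b_i).U_i$ then $\mathrm{Sends}_p(T)$; (4) if $\mathrm{unf}(U)=\&_{i\in I}p?\ell_i(\mathsf b_i).U_i$ then for every $i\in I$ there is $T_i$ with $T\hookrightarrow^{p?\ell_i(\mathsf b_i)}T_i$ and $T_i<:_\Theta U_i$; (5) for every $X\in\Theta$, $\mathrm{unf}(T)=X$ iff $\mathrm{unf}(U)=X$. *)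

(* Session types in locally nameless representation:
   free type variables are names (nat), bound variables are de Bruijn
   indices; mu binds index 0. *)
From Stdlib Require Import List Arith.
Import ListNotations.

Definition label := nat.
Definition participant := nat.
Definition tvar := nat.

Inductive ground : Type := GUnit | GBool | GInt.

Inductive styp : Type :=
| TEnd : styp
| TSend : participant -> list (label * ground * styp) -> styp
| TRecv : participant -> list (label * ground * styp) -> styp
| TFVar : tvar -> styp
| TBVar : nat -> styp
| TRec  : styp -> styp.

Definition br_label (br : label * ground * styp) : label := fst (fst br).

Fixpoint open_rec (k : nat) (u : styp) (T : styp) : styp :=
  match T with
  | TEnd => TEnd
  | TSend p bs => TSend p (map (fun br => match br with (l, b, V) => (l, b, open_rec k u V) end) bs)
  | TRecv p bs => TRecv p (map (fun br => match br with (l, b, V) => (l, b, open_rec k u V) end) bs)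
  | TFVar x => TFVar x
  | TBVar n => if Nat.eqb n k then u else TBVar n
  | TRec V => TRec (open_rec (S k) u V)
  end.
Definition open (T u : styp) : styp := open_rec 0 u T.

Fixpoint close_rec (k : nat) (x : tvar) (T : styp) : styp :=
  match T with
  | TEnd => TEnd
  | TSend p bs => TSend p (map (fun br => match br with (l, b, V) => (l, b, close_rec k x V) end) bs)
  | TRecv p bs => TRecv p (map (fun br => match br with (l, b, V) => (l, b, close_rec k x V) end) bs)
  | TFVar y => if Nat.eqb y x then TBVar k else TFVar y
  | TBVar n => TBVar n
  | TRec V => TRec (close_rec (S k) x V)
  end.

Definition mu (X : tvar) (T : styp) : styp := TRec (close_rec 0 X T).

Fixpoint substf (sigma : tvar -> styp) (T : styp) : styp :=
  match T with
  | TEnd => TEnd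
  | TSend p bs => TSend p (map (fun br => match br with (l, b, V) => (l, b, substf sigma V) end) bs)
  | TRecv p bs => TRecv p (map (fun br => match br with (l, b, V) => (l, b, substf sigma V) end) bs)
  | TFVar y => sigma y
  | TBVar n => TBVar n
  | TRec V => TRec (substf sigma V)
  end.

Fixpoint msub_var (n : nat) (X : nat -> tvar) (Ts : nat -> styp) (y : tvar) : styp :=
  match n with
  | O => TFVar y
  | S m => if Nat.eqb (X m) y then Ts m else msub_var m X Ts y
  end.
Definition msubst (n : nat) (X : nat -> tvar) (Ts : nat -> styp) (T : styp) : styp :=
  substf (msub_var n X Ts) T.

Fixpoint unguarded (k : nat) (T : styp) : Prop :=
  match T with
  | TBVar n => n = k
  | TRec V => unguarded (S k) V
  | _ => False
  end.

Inductive wf_at (Theta : tvar -> Prop) : nat -> styp -> Prop :=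
| wf_end k : wf_at Theta k TEnd
| wf_fvar k x : Theta x -> wf_at Theta k (TFVar x)
| wf_bvar k n : n < k -> wf_at Theta k (TBVar n)
| wf_send k p bs :
    bs <> [] -> NoDup (map br_label bs) ->
    (forall l b V, In (l, b, V) bs -> wf_at Theta k V) ->
    wf_at Theta k (TSend p bs)
| wf_recv k p bs :
    bs <> [] -> NoDup (map br_label bs) ->
    (forall l b V, In (l, b, V) bs -> wf_at Theta k V) ->
    wf_at Theta k (TRecv p bs)
| wf_rec k V : wf_at Theta (S k) V -> ~ unguarded 0 V -> wf_at Theta k (TRec V).

Definition wf (Theta : tvar -> Prop) (T : styp) : Prop := wf_at Theta 0 T.

Inductive Unf : styp -> styp -> Prop :=
| unf_rec V T' : Unf (open V (TRec V)) T' -> Unf (TRec V) T'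
| unf_other T : (forall V, T <> TRec V) -> Unf T T.

Inductive SendStep (p : participant) (l : label) (b : ground) : styp -> styp -> Prop :=
| ss_base bs V : In (l, b, V) bs -> SendStep p l b (TSend p bs) V
| ss_send q bsI bsJ bs' :
    p <> q -> incl bsJ bsI -> NoDup (map br_label bsJ) -> bsJ <> [] ->
    Forall2 (fun br br' => fst br = fst br' /\ SendStep p l b (snd br) (snd br')) bsJ bs' ->
    SendStep p l b (TSend q bsI) (TSend q bs')
| ss_recv q bs bs' :
    Forall2 (fun br br' => fst br = fst br' /\ SendStep p l b (snd br) (snd br')) bs bs' ->
    SendStep p l b (TRecv q bs) (TRecv q bs')
| ss_rec V U' : SendStep p l b (open V (TRec V)) U' -> SendStep p l b (TRec V) U'.

Inductive Sends (p : participant) : styp -> Prop :=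
| sends_base bs : Sends p (TSend p bs)
| sends_send q bs : (forall l b V, In (l, b, V) bs -> Sends p V) -> Sends p (TSend q bs)
| sends_rec V : Sends p V -> Sends p (TRec V).

Inductive RecvStep (p : participant) (l : label) (b : ground) : styp -> styp -> Prop :=
| rs_base bs V : In (l, b, V) bs -> RecvStep p l b (TRecv p bs) V
| rs_recv q bsI bsJ bs' :
    p <> q -> incl bsJ bsI -> NoDup (map br_label bsJ) -> bsJ <> [] ->
    Forall2 (fun br br' => fst br = fst br' /\ RecvStep p l b (snd br) (snd br')) bsJ bs' ->
    RecvStep p l b (TRecv q bsI) (TRecv q bs')
| rs_send q bs bs' :
    Forall2 (fun br br' => fst br = fst br' /\ RecvStep p l b (snd br) (snd br')) bs bs' ->
    RecvStep p l b (TSend q bs) (TSend q bs')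
| rs_rec V U' : RecvStep p l b (open V (TRec V)) U' -> RecvStep p l b (TRec V) U'.

Inductive Recvs (p : participant) : styp -> Prop :=
| recvs_base bs : Recvs p (TRecv p bs)
| recvs_recv q bs : (forall l b V, In (l, b, V) bs -> Recvs p V) -> Recvs p (TRecv q bs)
| recvs_rec V : Recvs p V -> Recvs p (TRec V).

Definition is_async_sim (Theta : tvar -> Prop) (R : styp -> styp -> Prop) : Prop :=
  forall T U, R T U ->
    wf Theta T /\ wf Theta U /\
    (forall p bs, Unf T (TSend p bs) ->
       forall l b Ti, In (l, b, Ti) bs -> exists Ui, SendStep p l b U Ui /\ R Ti Ui) /\
    (forall p bs, Unf T (TRecv p bs) -> Recvs p U) /\
    (forall p bs, Unf U (TSend p bs) -> Sends p T) /\
    (forall p bs, Unf U (TRecv p bs) ->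
       forall l b Ui, In (l, b, Ui) bs -> exists Ti, RecvStep p l b T Ti /\ R Ti Ui) /\
    (forall X, Theta X -> (Unf T (TFVar X) <-> Unf U (TFVar X))).

(* asynchronous subtyping <:_Theta : the largest such relation *)
Definition asub (Theta : tvar -> Prop) (T U : styp) : Prop :=
  exists R, is_async_sim Theta R /\ R T U.

Definition branches (I : list nat) (l : nat -> label) (b : nat -> ground) (T : nat -> styp)
  : list (label * ground * styp) := map (fun i => (l i, b i, T i)) I.

(* All statements are proved by coinduction up to [asub]: it suffices to exhibit a relation
   whose pairs satisfy clauses (1)-(5) relative to that relation joined with [asub].  Rules (v) and (vi) are instances of one
   substitution principle: the pairs (A[s], B[s']) with A <: B satisfy the clauses as soon as
   every substituted variable is mapped to a pair that does; for mu X this pair is the two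
   recursive types themselves, which unfold to the substituted bodies.

   Transitivity reduces to transfer properties of T <: U: an output T ~p!l~> T' is matched by
   some U ~p!l~> U' with T' <: U', Recvs_p T implies Recvs_p U, and the statements obtained by
   exchanging outputs and inputs, which follow by duality since [dual] reverses <:.  The output
   transfer is proved by induction on the height of T ~p!l~> T'.  If T begins with an output
   to q <> p, every branch of T gives a q-derivative of U whose p-output can be moved before the
   output to q; these p-derivatives of U are merged into one offering all their outputs, and
   subtyping is preserved by such a widening of the supertype.  If T begins with an input from
   q, a second induction on the height of Recvs_q U lets the output of T commute with the inputs
   that U performs before its input from q. *)

From Stdlib Require Import List Arith Lia Classical.
Import ListNotations.

Notation branch := (label * ground * styp)%type.

Definition bmap (f : styp -> styp) (bs : list branch) : list branch :=
  map (fun br => match br with (l, b, V) => (l, b, f V) end) bs.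

Section StypNestedInd.
Variable P : styp -> Prop.
Hypothesis P_end : P TEnd.
Hypothesis P_send : forall p bs, Forall (fun br => P (snd br)) bs -> P (TSend p bs).
Hypothesis P_recv : forall p bs, Forall (fun br => P (snd br)) bs -> P (TRecv p bs).
Hypothesis P_fvar : forall x, P (TFVar x).
Hypothesis P_bvar : forall n, P (TBVar n).
Hypothesis P_rec : forall V, P V -> P (TRec V).

Fixpoint styp_nested_ind (T : styp) : P T :=
  let fix branches_ind (bs : list branch) : Forall (fun br => P (snd br)) bs :=
    match bs with
    | [] => Forall_nil _
    | (l, b, V) :: bs' =>
        @Forall_cons _ (fun br => P (snd br)) (l, b, V) bs' (styp_nested_ind V) (branches_ind bs')
    end in
  match T with
  | TEnd => P_end
  | TSend p bs => P_send p bs (branches_ind bs)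
  | TRecv p bs => P_recv p bs (branches_ind bs)
  | TFVar x => P_fvar x
  | TBVar n => P_bvar n
  | TRec V => P_rec V (styp_nested_ind V)
  end.
End StypNestedInd.

Section SendStepNestedInd.
Variables (p : participant) (l : label) (b : ground) (P : styp -> styp -> Prop).
Hypothesis P_base : forall bs V, In (l, b, V) bs -> P (TSend p bs) V.
Hypothesis P_send : forall q bsI bsJ bs', p <> q -> incl bsJ bsI -> NoDup (map br_label bsJ) ->
  bsJ <> [] ->
  Forall2 (fun br br' : branch =>
    fst br = fst br' /\ SendStep p l b (snd br) (snd br') /\ P (snd br) (snd br'))
    bsJ bs' -> P (TSend q bsI) (TSend q bs').
Hypothesis P_recv : forall q bs bs',
  Forall2 (fun br br' : branch =>
    fst br = fst br' /\ SendStep p l b (snd br) (snd br') /\ P (snd br) (snd br'))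
    bs bs' -> P (TRecv q bs) (TRecv q bs').
Hypothesis P_rec : forall V U', SendStep p l b (open V (TRec V)) U' -> P (open V (TRec V)) U' ->
  P (TRec V) U'.

Fixpoint SendStep_nested_ind U U' (H : SendStep p l b U U') {struct H} : P U U' :=
  let fix steps_ind xs ys
      (F : Forall2 (fun br br' => fst br = fst br' /\ SendStep p l b (snd br) (snd br')) xs ys)
      : Forall2 (fun br br' : branch =>
          fst br = fst br' /\ SendStep p l b (snd br) (snd br') /\ P (snd br) (snd br')) xs ys :=
    match F with
    | Forall2_nil _ => Forall2_nil _
    | Forall2_cons x y (conj e s) F' =>
        Forall2_cons x y (conj e (conj s (SendStep_nested_ind _ _ s))) (steps_ind _ _ F')
    end in
  match H with
  | ss_base _ _ _ bs V Hin => P_base bs V Hin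
  | ss_send _ _ _ q bsI bsJ bs' Hpq Hincl Hnd Hne F => P_send q bsI bsJ bs' Hpq Hincl Hnd Hne
      (steps_ind _ _ F)
  | ss_recv _ _ _ q bs bs' F => P_recv q bs bs' (steps_ind _ _ F)
  | ss_rec _ _ _ V U' H' => P_rec V U' H' (SendStep_nested_ind _ _ H')
  end.
End SendStepNestedInd.

Section RecvStepNestedInd.
Variables (p : participant) (l : label) (b : ground) (P : styp -> styp -> Prop).
Hypothesis P_base : forall bs V, In (l, b, V) bs -> P (TRecv p bs) V.
Hypothesis P_recv : forall q bsI bsJ bs', p <> q -> incl bsJ bsI -> NoDup (map br_label bsJ) ->
  bsJ <> [] ->
  Forall2 (fun br br' : branch =>
    fst br = fst br' /\ RecvStep p l b (snd br) (snd br') /\ P (snd br) (snd br'))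
    bsJ bs' -> P (TRecv q bsI) (TRecv q bs').
Hypothesis P_send : forall q bs bs',
  Forall2 (fun br br' : branch =>
    fst br = fst br' /\ RecvStep p l b (snd br) (snd br') /\ P (snd br) (snd br'))
    bs bs' -> P (TSend q bs) (TSend q bs').
Hypothesis P_rec : forall V U', RecvStep p l b (open V (TRec V)) U' -> P (open V (TRec V)) U' ->
  P (TRec V) U'.

Fixpoint RecvStep_nested_ind U U' (H : RecvStep p l b U U') {struct H} : P U U' :=
  let fix steps_ind xs ys
      (F : Forall2 (fun br br' => fst br = fst br' /\ RecvStep p l b (snd br) (snd br')) xs ys)
      : Forall2 (fun br br' : branch =>
          fst br = fst br' /\ RecvStep p l b (snd br) (snd br') /\ P (snd br) (snd br')) xs ys :=
    match F with
    | Forall2_nil _ => Forall2_nil _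
    | Forall2_cons x y (conj e s) F' =>
        Forall2_cons x y (conj e (conj s (RecvStep_nested_ind _ _ s))) (steps_ind _ _ F')
    end in
  match H with
  | rs_base _ _ _ bs V Hin => P_base bs V Hin
  | rs_recv _ _ _ q bsI bsJ bs' Hpq Hincl Hnd Hne F => P_recv q bsI bsJ bs' Hpq Hincl Hnd Hne
      (steps_ind _ _ F)
  | rs_send _ _ _ q bs bs' F => P_send q bs bs' (steps_ind _ _ F)
  | rs_rec _ _ _ V U' H' => P_rec V U' H' (RecvStep_nested_ind _ _ H')
  end.
End RecvStepNestedInd.

Lemma Forall2_in_l {A B} (P : A -> B -> Prop) xs ys : Forall2 P xs ys ->
  forall x, In x xs -> exists y, In y ys /\ P x y.
Proof.
  induction 1; simpl; intros x0 Hx; [tauto|].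
  destruct Hx as [<-|Hx]; eauto.
  destruct (IHForall2 _ Hx) as [y' [? ?]]; eauto.
Qed.

Lemma Forall2_in_r {A B} (P : A -> B -> Prop) xs ys : Forall2 P xs ys ->
  forall y, In y ys -> exists x, In x xs /\ P x y.
Proof.
  induction 1; simpl; intros y0 Hy; [tauto|].
  destruct Hy as [<-|Hy]; eauto.
  destruct (IHForall2 _ Hy) as [x' [? ?]]; eauto.
Qed.

Lemma Forall2_choice {A B} (P : A -> B -> Prop) xs :
  (forall x, In x xs -> exists y, P x y) -> exists ys, Forall2 P xs ys.
Proof.
  induction xs as [|x xs IH]; intros H; [exists []; constructor|].
  destruct (H x (or_introl eq_refl)) as [y Hy].
  destruct IH as [ys Hys]; [intros; apply H; simpl; auto|].
  exists (y :: ys). constructor; auto.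
Qed.

Lemma Forall2_nonnil {A B} (P : A -> B -> Prop) xs ys : Forall2 P xs ys -> xs <> [] -> ys <> [].
Proof. destruct 1; [auto | discriminate]. Qed.

Lemma Forall2_incl_r {A B} (P : A -> B -> Prop) xs ys L :
  Forall2 P xs ys -> (forall x y, P x y -> In y L) -> incl ys L.
Proof.
  induction 1; intros H' z Hz; simpl in Hz; [tauto|].
  destruct Hz as [<-|Hz]; eauto. apply IHForall2; auto.
Qed.

Lemma Forall2_trans_on {A} (P : A -> Prop) (R : A -> A -> Prop) xs ys zs :
  Forall P xs -> Forall2 R xs ys -> Forall2 R ys zs ->
  (forall x y z, P x -> R x y -> R y z -> R x z) -> Forall2 R xs zs.
Proof.
  intros HP F1. revert zs.
  induction F1; intros zs F2 H'; inversion F2; subst; constructor; inversion HP; subst; eauto.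
Qed.

Lemma Forall2_square {A B C D} (P : A -> B -> Prop) (Q1 : A -> C -> Prop) (Q2 : B -> D -> Prop)
    (Q3 : C -> D -> Prop) xs ys :
  Forall2 P xs ys -> (forall x y, In x xs -> P x y -> exists c d, Q1 x c /\ Q2 y d /\ Q3 c d) ->
  exists cs ds, Forall2 Q1 xs cs /\ Forall2 Q2 ys ds /\ Forall2 Q3 cs ds.
Proof.
  induction 1; intros H'; [exists [], []; repeat constructor|].
  destruct (H' x y (or_introl eq_refl) H) as [c [d [? [? ?]]]].
  destruct IHForall2 as [cs [ds [? [? ?]]]]; [intros; apply H'; simpl; auto|].
  exists (c :: cs), (d :: ds). repeat constructor; auto.
Qed.

Lemma Forall2_compose_factor {A B C D} (P : A -> B -> Prop) (Q : B -> C -> Prop)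
    (R1 : A -> D -> Prop) (R2 : D -> C -> Prop) xs ys zs :
  Forall2 P xs ys -> Forall2 Q ys zs ->
  (forall x y z, In x xs -> P x y -> Q y z -> exists w, R1 x w /\ R2 w z) ->
  exists ws, Forall2 R1 xs ws /\ Forall2 R2 ws zs.
Proof.
  intros F. revert zs.
  induction F; intros zs G H'; inversion G; subst; [exists []; split; constructor|].
  destruct (H' x y y0 (or_introl eq_refl) H H2) as [w [? ?]].
  destruct (IHF l'0 H4) as [ws [? ?]]; [intros; eapply H'; simpl; eauto|].
  exists (w :: ws). split; constructor; auto.
Qed.

Lemma Forall2_cospan {A B C D} (P : A -> B -> Prop) (Q : A -> C -> Prop) (R1 : A -> D -> Prop)
    (R2 : B -> D -> Prop) (R3 : C -> D -> Prop) xs ys zs :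
  Forall2 P xs ys -> Forall2 Q xs zs ->
  (forall x y z, In x xs -> P x y -> Q x z -> exists w, R1 x w /\ R2 y w /\ R3 z w) ->
  exists ws, Forall2 R1 xs ws /\ Forall2 R2 ys ws /\ Forall2 R3 zs ws.
Proof.
  intros F. revert zs.
  induction F; intros zs G H'; inversion G; subst; [exists []; repeat constructor|].
  destruct (H' x y y0 (or_introl eq_refl) H H2) as [w [? [? ?]]].
  destruct (IHF l'0 H4) as [ws [? [? ?]]]; [intros; eapply H'; simpl; eauto|].
  exists (w :: ws). repeat constructor; auto.
Qed.

Lemma Forall2_zip {A B} (P : A -> B -> Prop) xs ys : Forall2 P xs ys ->
  exists zs, xs = map fst zs /\ ys = map snd zs /\ forall z, In z zs -> P (fst z) (snd z).
Proof.
  induction 1; [exists []; simpl; intuition|].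
  destruct IHForall2 as [zs [-> [-> Hz]]].
  exists ((x, y) :: zs). simpl. intuition. subst; auto.
Qed.

Lemma Forall2_unzip {A B} (P : A -> B -> Prop) zs :
  (forall z, In z zs -> P (fst z) (snd z)) -> Forall2 P (map fst zs) (map snd zs).
Proof. induction zs; simpl; intros H; constructor; auto. Qed.

Lemma NoDup_map_inj_in {A B} (g : A -> B) (Z : list A) z1 z2 :
  NoDup (map g Z) -> In z1 Z -> In z2 Z -> g z1 = g z2 -> z1 = z2.
Proof.
  induction Z as [|z Z IH]; simpl; [tauto|]. intros Hnd H1 H2 E.
  inversion Hnd as [|? ? Hn Hnd']; subst.
  destruct H1 as [<-|H1]; destruct H2 as [<-|H2]; auto;
    exfalso; apply Hn; [rewrite E | rewrite <- E]; apply in_map; auto.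
Qed.

Lemma NoDup_map_filter {A B} (g : A -> B) (f : A -> bool) Z :
  NoDup (map g Z) -> NoDup (map g (filter f Z)).
Proof.
  induction Z as [|z Z IH]; simpl; auto. intros Hnd. inversion Hnd as [|? ? Hn Hnd']; subst.
  destruct (f z); simpl; auto. constructor; auto. intros Hin. apply Hn.
  apply in_map_iff in Hin as [x [Ex Hx]]. apply filter_In in Hx as [Hx _].
  rewrite <- Ex. apply in_map. auto.
Qed.

Lemma Forall2_br_labels (P : branch -> branch -> Prop) xs ys :
  Forall2 P xs ys -> (forall a c, P a c -> fst a = fst c) -> map br_label xs = map br_label ys.
Proof.
  induction 1; simpl; intros H'; auto.
  unfold br_label at 1 3. rewrite (H' _ _ H). f_equal; auto.
Qed.

Lemma Forall2_selection (R : branch -> branch -> Prop) bsI bsJ ds :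
  Forall2 R bsJ ds -> (forall j d, R j d -> In d bsI /\ fst j = fst d) ->
  NoDup (map br_label bsJ) -> bsJ <> [] -> incl ds bsI /\ NoDup (map br_label ds) /\ ds <> [].
Proof.
  intros F HR Hnd Hne. split; [|split].
  - eapply Forall2_incl_r; eauto. apply HR.
  - rewrite <- (Forall2_br_labels _ _ _ F); auto. apply HR.
  - eapply Forall2_nonnil; eauto.
Qed.

Lemma Forall2_map_l {A A' B} (f : A -> A') (R : A' -> B -> Prop) xs ys :
  Forall2 (fun x y => R (f x) y) xs ys -> Forall2 R (map f xs) ys.
Proof. induction 1; constructor; auto. Qed.

Lemma in_bmap_iff f bs l b V : In (l, b, V) (bmap f bs) <-> exists V0, In (l, b, V0) bs /\ V = f V0.
Proof.
  induction bs as [|[[l0 b0] V0] bs IH]; simpl.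
  - split; [tauto | intros [? [[] _]]].
  - split.
    + intros [E|H].
      * inversion E; subst. eauto.
      * apply IH in H as [V1 [H1 H2]]. eauto.
    + intros [V1 [[E|H1] H2]].
      * inversion E; subst. auto.
      * right. apply IH. eauto.
Qed.

Lemma in_bmap f bs l b V : In (l, b, V) bs -> In (l, b, f V) (bmap f bs).
Proof. intros H. apply in_bmap_iff. eauto. Qed.

Lemma bmap_labels f bs : map br_label (bmap f bs) = map br_label bs.
Proof. induction bs as [|[[l0 b0] V0] bs IH]; simpl; f_equal; auto. Qed.

Lemma bmap_nil_iff f bs : bmap f bs <> [] <-> bs <> [].
Proof. destruct bs; simpl; split; intros H E; try discriminate; tauto. Qed.

Lemma bmap_comp f g bs : bmap f (bmap g bs) = bmap (fun x => f (g x)) bs.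
Proof. induction bs as [|[[l0 b0] V0] bs IH]; simpl; f_equal; auto. Qed.

Lemma bmap_ext_in f g bs : (forall l b V, In (l, b, V) bs -> f V = g V) -> bmap f bs = bmap g bs.
Proof.
  induction bs as [|[[l0 b0] V0] bs IH]; simpl; intros H; auto.
  f_equal; [rewrite (H l0 b0 V0) | apply IH]; eauto.
Qed.

Lemma bmap_id_in f bs : (forall l b V, In (l, b, V) bs -> f V = V) -> bmap f bs = bs.
Proof.
  induction bs as [|[[l0 b0] V0] bs IH]; simpl; intros H; auto.
  f_equal; [rewrite (H l0 b0 V0) | apply IH]; eauto.
Qed.

Lemma Forall2_bmap (P Q : styp -> styp -> Prop) f g xs ys :
  Forall2 (fun br br' => fst br = fst br' /\ P (snd br) (snd br')) xs ys ->
  (forall a c, P a c -> Q (f a) (g c)) ->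
  Forall2 (fun br br' => fst br = fst br' /\ Q (snd br) (snd br')) (bmap f xs) (bmap g ys).
Proof.
  induction 1; intros HPQ; simpl; constructor; auto.
  destruct x as [[? ?] ?], y as [[? ?] ?]; simpl in *. destruct H as [E HP]. split; auto.
Qed.

Lemma open_rec_send k u p bs : open_rec k u (TSend p bs) = TSend p (bmap (open_rec k u) bs).
Proof. reflexivity. Qed.
Lemma open_rec_recv k u p bs : open_rec k u (TRecv p bs) = TRecv p (bmap (open_rec k u) bs).
Proof. reflexivity. Qed.
Lemma close_rec_send k x p bs : close_rec k x (TSend p bs) = TSend p (bmap (close_rec k x) bs).
Proof. reflexivity. Qed.
Lemma close_rec_recv k x p bs : close_rec k x (TRecv p bs) = TRecv p (bmap (close_rec k x) bs).
Proof. reflexivity. Qed.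
Lemma substf_send s p bs : substf s (TSend p bs) = TSend p (bmap (substf s) bs).
Proof. reflexivity. Qed.
Lemma substf_recv s p bs : substf s (TRecv p bs) = TRecv p (bmap (substf s) bs).
Proof. reflexivity. Qed.

Ltac branch_IH H Hin :=
  let H' := fresh "IH" in
  pose proof (proj1 (Forall_forall _ _) H _ Hin) as H'; simpl in H'.

(** * Well-formedness, opening and unfolding *)

Lemma wf_send_inv Th p bs : wf Th (TSend p bs) ->
  bs <> [] /\ NoDup (map br_label bs) /\ forall l b V, In (l, b, V) bs -> wf Th V.
Proof. intros H. inversion H; subst. auto. Qed.

Lemma wf_recv_inv Th p bs : wf Th (TRecv p bs) ->
  bs <> [] /\ NoDup (map br_label bs) /\ forall l b V, In (l, b, V) bs -> wf Th V.
Proof. intros H. inversion H; subst. auto. Qed.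

Lemma wf_at_open_rec_id Th k T : wf_at Th k T -> forall j u, k <= j -> open_rec j u T = T.
Proof.
  induction 1; intros j u Hj; simpl; auto.
  - destruct (Nat.eqb_spec n j); auto. lia.
  - f_equal. apply bmap_id_in. eauto.
  - f_equal. apply bmap_id_in. eauto.
  - f_equal. apply IHwf_at. lia.
Qed.

Lemma wf_open_rec_id Th T : wf Th T -> forall k u, open_rec k u T = T.
Proof. intros H k u. eapply wf_at_open_rec_id; eauto. lia. Qed.

Lemma wf_at_weaken Th k T : wf_at Th k T -> forall k', k <= k' -> wf_at Th k' T.
Proof.
  induction 1; intros k' Hk; econstructor; eauto; try lia.
  apply IHwf_at. lia.
Qed.

Lemma wf_at_not_unguarded Th k T : wf_at Th k T -> forall j, k <= j -> ~ unguarded j T.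
Proof.
  induction 1; intros j Hj; simpl; auto; try tauto.
  - lia.
  - apply IHwf_at. lia.
Qed.

Lemma wf_not_unguarded Th T : wf Th T -> forall j, ~ unguarded j T.
Proof. intros H j. eapply wf_at_not_unguarded; eauto. lia. Qed.

Lemma unguarded_open_rec u : (forall j, ~ unguarded j u) ->
  forall V i j, unguarded j (open_rec i u V) -> unguarded j V.
Proof.
  intros Hu V. induction V; intros i j; simpl; auto.
  - destruct (Nat.eqb_spec n i); simpl; auto. intros H. exfalso; eapply Hu; eauto.
  - apply IHV.
Qed.

Lemma wf_at_open_rec Th k V u : wf_at Th (S k) V -> wf Th u -> wf_at Th k (open_rec k u V).
Proof.
  intros H. remember (S k) as k1 eqn:Ek. revert k Ek.
  induction H; intros k' Ek Hu; subst.
  - constructor.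
  - constructor; auto.
  - simpl. destruct (Nat.eqb_spec n k').
    + eapply wf_at_weaken; eauto; lia.
    + constructor. lia.
  - rewrite open_rec_send. constructor.
    + apply bmap_nil_iff; auto.
    + rewrite bmap_labels; auto.
    + intros l0 b0 V0 Hin. apply in_bmap_iff in Hin as [V1 [Hin ->]]. eauto.
  - rewrite open_rec_recv. constructor.
    + apply bmap_nil_iff; auto.
    + rewrite bmap_labels; auto.
    + intros l0 b0 V0 Hin. apply in_bmap_iff in Hin as [V1 [Hin ->]]. eauto.
  - simpl. constructor.
    + apply IHwf_at; auto.
    + intros Hg. apply H0. eapply unguarded_open_rec; eauto.
      intros j. eapply wf_at_not_unguarded; eauto. lia.
Qed.

Lemma wf_unfold_rec Th V : wf Th (TRec V) -> wf Th (open V (TRec V)).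
Proof. intros H. inversion H; subst. apply wf_at_open_rec; auto. Qed.

Fixpoint rec_depth T := match T with TRec V => S (rec_depth V) | _ => 0 end.
Fixpoint rec_core T := match T with TRec V => rec_core V | _ => T end.

Lemma unguarded_rec_core T : forall j, unguarded j T <-> rec_core T = TBVar (j + rec_depth T).
Proof.
  induction T; intros j; simpl; try (split; [tauto | congruence]).
  - split; intros H.
    + subst. f_equal. lia.
    + inversion H. lia.
  - rewrite IHT. replace (S j + rec_depth T) with (j + S (rec_depth T)) by lia. tauto.
Qed.

Lemma wf_at_rec_core_bvar Th k T : wf_at Th k T ->
  forall m, rec_core T = TBVar m -> rec_depth T <= m < k + rec_depth T.
Proof.
  induction 1; intros m Hm; simpl in *; try discriminate.
  - inversion Hm; subst. lia.
  - specialize (IHwf_at m Hm).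
    assert (m <> rec_depth V).
    { intros E. apply H0. apply unguarded_rec_core. rewrite Hm. f_equal. lia. }
    lia.
Qed.

Lemma wf_rec_core_not_bvar Th T : wf Th T -> forall m, rec_core T <> TBVar m.
Proof. intros H m Hm. pose proof (wf_at_rec_core_bvar _ _ _ H m Hm). lia. Qed.

Lemma open_rec_core T : (forall m, rec_core T <> TBVar m) -> forall k u,
  rec_depth (open_rec k u T) = rec_depth T /\
  rec_core (open_rec k u T) = open_rec (k + rec_depth T) u (rec_core T).
Proof.
  induction T; intros Hh k u; simpl in *;
    try (split; [reflexivity | rewrite ?Nat.add_0_r; reflexivity]).
  - exfalso. eapply Hh; eauto.
  - destruct (IHT Hh (S k) u) as [E1 E2]. rewrite E1, E2. split; auto. f_equal. lia.
Qed.

Lemma Unf_exists Th T : wf Th T -> exists Z, Unf T Z.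
Proof.
  intros Hw. remember (rec_depth T) as n eqn:En. revert T Hw En.
  induction n; intros T Hw En;
    destruct T as [| | | | |V]; try (eexists; apply unf_other; congruence); try discriminate.
  assert (Hh : forall m, rec_core V <> TBVar m) by exact (wf_rec_core_not_bvar _ _ Hw).
  destruct (IHn (open V (TRec V))) as [Z HZ].
  - apply wf_unfold_rec; auto.
  - unfold open. rewrite (proj1 (open_rec_core _ Hh 0 (TRec V))). simpl in En. congruence.
  - exists Z. constructor. auto.
Qed.

Lemma Unf_functional T Z : Unf T Z -> forall Z', Unf T Z' -> Z = Z'.
Proof.
  induction 1; intros Z' H'.
  - inversion H'; subst; auto. exfalso; eapply H0; eauto.
  - inversion H'; subst; auto. exfalso; eapply H; eauto.
Qed.

Lemma Unf_not_rec T Z : Unf T Z -> forall V, Z <> TRec V.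
Proof. induction 1; auto. Qed.

Lemma Unf_wf Th T Z : Unf T Z -> wf Th T -> wf Th Z.
Proof. induction 1; intros Hw; auto. apply IHUnf. apply wf_unfold_rec; auto. Qed.

Lemma Unf_fvar_rec_core Th T x : wf Th T -> Unf T (TFVar x) -> rec_core T = TFVar x.
Proof.
  intros Hw H. remember (TFVar x) as Z. revert Hw. induction H; intros Hw; subst; [|reflexivity].
  pose proof (wf_rec_core_not_bvar _ _ Hw) as Hh. simpl in Hh |- *.
  specialize (IHUnf eq_refl (wf_unfold_rec _ _ Hw)).
  unfold open in IHUnf. rewrite (proj2 (open_rec_core _ Hh 0 (TRec V))) in IHUnf.
  destruct (rec_core V) eqn:E; simpl in IHUnf; try discriminate; auto.
  exfalso; eapply Hh; eauto.
Qed.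

Lemma close_rec_core_unguarded T x :
  rec_core T = TFVar x -> forall j, unguarded j (close_rec j x T).
Proof.
  induction T; simpl; intros H j; try discriminate.
  - inversion H; subst. rewrite Nat.eqb_refl. reflexivity.
  - apply IHT; auto.
Qed.

Lemma SendStep_Unf_iff p l b T Z : Unf T Z -> forall Y, SendStep p l b T Y <-> SendStep p l b Z Y.
Proof.
  induction 1; intros Y; [|tauto]. rewrite <- IHUnf. split; intros HY.
  - inversion HY; subst. auto.
  - apply ss_rec. auto.
Qed.

Lemma RecvStep_Unf_iff p l b T Z : Unf T Z -> forall Y, RecvStep p l b T Y <-> RecvStep p l b Z Y.
Proof.
  induction 1; intros Y; [|tauto]. rewrite <- IHUnf. split; intros HY.
  - inversion HY; subst. auto.
  - apply rs_rec. auto.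
Qed.

Lemma Unf_send p bs : Unf (TSend p bs) (TSend p bs).
Proof. constructor. discriminate. Qed.

Lemma Unf_recv p bs : Unf (TRecv p bs) (TRecv p bs).
Proof. constructor. discriminate. Qed.

Lemma Unf_fvar_scope Th T x : wf Th T -> Unf T (TFVar x) -> Th x.
Proof. intros Hw Hu. apply (Unf_wf _ _ _ Hu) in Hw. inversion Hw. auto. Qed.

Lemma Sends_open_rec p V : Sends p V -> forall k u, Sends p (open_rec k u V).
Proof.
  induction 1; intros k u.
  - constructor.
  - rewrite open_rec_send. apply sends_send.
    intros l0 b0 V0 Hin. apply in_bmap_iff in Hin as [V1 [Hin ->]]. eauto.
  - constructor. auto.
Qed.

Lemma Recvs_open_rec p V : Recvs p V -> forall k u, Recvs p (open_rec k u V).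
Proof.
  induction 1; intros k u.
  - constructor.
  - rewrite open_rec_recv. apply recvs_recv.
    intros l0 b0 V0 Hin. apply in_bmap_iff in Hin as [V1 [Hin ->]]. eauto.
  - constructor. auto.
Qed.

Lemma Sends_open_rec_inv p u V : forall k, Sends p (open_rec k u V) -> Sends p V \/ Sends p u.
Proof.
  induction V using styp_nested_ind; intros k Hs.
  - inversion Hs.
  - rewrite open_rec_send in Hs. inversion Hs; subst; [left; constructor|].
    destruct (classic (Sends p u)) as [Hu|Hu]; [right; auto | left].
    apply sends_send. intros l0 b0 V0 Hin. branch_IH H Hin.
    assert (Hs0 : Sends p (open_rec k u V0)) by (eapply H1, in_bmap; eauto).
    destruct (IH k Hs0); tauto.
  - rewrite open_rec_recv in Hs. inversion Hs.
  - inversion Hs.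
  - simpl in Hs. destruct (Nat.eqb n k); [auto | inversion Hs].
  - inversion Hs; subst. destruct (IHV (S k) H0); auto. left. constructor. auto.
Qed.

Lemma Recvs_open_rec_inv p u V : forall k, Recvs p (open_rec k u V) -> Recvs p V \/ Recvs p u.
Proof.
  induction V using styp_nested_ind; intros k Hs.
  - inversion Hs.
  - rewrite open_rec_send in Hs. inversion Hs.
  - rewrite open_rec_recv in Hs. inversion Hs; subst; [left; constructor|].
    destruct (classic (Recvs p u)) as [Hu|Hu]; [right; auto | left].
    apply recvs_recv. intros l0 b0 V0 Hin. branch_IH H Hin.
    assert (Hr0 : Recvs p (open_rec k u V0)) by (eapply H1, in_bmap; eauto).
    destruct (IH k Hr0); tauto.
  - inversion Hs.
  - simpl in Hs. destruct (Nat.eqb n k); [auto | inversion Hs].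
  - inversion Hs; subst. destruct (IHV (S k) H0); auto. left. constructor. auto.
Qed.

Lemma Sends_Unf p T Z : Unf T Z -> (Sends p T <-> Sends p Z).
Proof.
  induction 1; [|tauto]. rewrite <- IHUnf. split; intros H'.
  - inversion H'; subst. apply Sends_open_rec. auto.
  - destruct (Sends_open_rec_inv _ _ _ _ H'); auto. constructor; auto.
Qed.

Lemma Recvs_Unf p T Z : Unf T Z -> (Recvs p T <-> Recvs p Z).
Proof.
  induction 1; [|tauto]. rewrite <- IHUnf. split; intros H'.
  - inversion H'; subst. apply Recvs_open_rec. auto.
  - destruct (Recvs_open_rec_inv _ _ _ _ H'); auto. constructor; auto.
Qed.

Lemma SendStep_wf Th p l b U U' : SendStep p l b U U' -> wf Th U -> wf Th U'.
Proof.
  induction 1 using SendStep_nested_ind; intros Hw.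
  - apply wf_send_inv in Hw as [_ [_ Hb]]. eauto.
  - apply wf_send_inv in Hw as [Hne [Hnd Hb]]. constructor.
    + eapply Forall2_nonnil; eauto.
    + rewrite <- (Forall2_br_labels _ _ _ H3); [auto | tauto].
    + intros l0 b0 V Hin. destruct (Forall2_in_r _ _ _ H3 _ Hin) as [[[l1 b1] X] [Hx [_ [_ IH]]]].
      apply IH. eapply Hb. apply H0. eauto.
  - apply wf_recv_inv in Hw as [Hne [Hnd Hb]]. constructor.
    + eapply Forall2_nonnil; eauto.
    + rewrite <- (Forall2_br_labels _ _ _ H); [auto | tauto].
    + intros l0 b0 V Hin. destruct (Forall2_in_r _ _ _ H _ Hin) as [[[l1 b1] X] [Hx [_ [_ IH]]]].
      apply IH. eauto.
  - apply IHSendStep. apply wf_unfold_rec; auto.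
Qed.

(** * Coinduction *)

Definition asub_gen (Th : tvar -> Prop) (R : styp -> styp -> Prop) (T U : styp) : Prop :=
  wf Th T /\ wf Th U /\
  (forall p bs, Unf T (TSend p bs) ->
     forall l b Ti, In (l, b, Ti) bs -> exists Ui, SendStep p l b U Ui /\ R Ti Ui) /\
  (forall p bs, Unf T (TRecv p bs) -> Recvs p U) /\
  (forall p bs, Unf U (TSend p bs) -> Sends p T) /\
  (forall p bs, Unf U (TRecv p bs) ->
     forall l b Ui, In (l, b, Ui) bs -> exists Ti, RecvStep p l b T Ti /\ R Ti Ui) /\
  (forall X, Th X -> (Unf T (TFVar X) <-> Unf U (TFVar X))).

Lemma asub_gen_mono Th (R R' : styp -> styp -> Prop) T U :
  (forall a c, R a c -> R' a c) -> asub_gen Th R T U -> asub_gen Th R' T U.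
Proof.
  intros HR [H1 [H2 [H3 [H4 [H5 [H6 H7]]]]]]. repeat split; auto.
  - intros p bs Hu l b Ti Hin. destruct (H3 p bs Hu l b Ti Hin) as [Ui [? ?]]; eauto.
  - intros p bs Hu l b Ui Hin. destruct (H6 p bs Hu l b Ui Hin) as [Ti [? ?]]; eauto.
  - apply H7; auto.
  - apply H7; auto.
Qed.

Lemma asub_gen_asub Th T U : asub Th T U -> asub_gen Th (asub Th) T U.
Proof.
  intros [R [HR HTU]]. apply (asub_gen_mono Th R); [|apply HR; auto].
  intros a c Hac. exists R; auto.
Qed.

Lemma asub_wf Th T U : asub Th T U -> wf Th T /\ wf Th U.
Proof. intros H. apply asub_gen_asub in H as [? [? _]]. auto. Qed.

Lemma asub_coind Th (R : styp -> styp -> Prop) :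
  (forall T U, R T U -> asub_gen Th (fun a c => R a c \/ asub Th a c) T U) ->
  forall T U, R T U -> asub Th T U.
Proof.
  intros H T U HTU. exists (fun a c => R a c \/ asub Th a c). split; auto.
  intros a c [Hac|Hac]; [apply H; auto|].
  apply (asub_gen_mono Th (asub Th)); auto. apply asub_gen_asub; auto.
Qed.

Lemma asub_gen_Unf Th R T T2 U U2 Z Z' :
  Unf T Z -> Unf T2 Z -> Unf U Z' -> Unf U2 Z' -> wf Th T2 -> wf Th U2 ->
  asub_gen Th R T U -> asub_gen Th R T2 U2.
Proof.
  intros HT HT2 HU HU2 W1 W2 [_ [_ [H3 [H4 [H5 [H6 H7]]]]]]. repeat split; auto.
  - intros p bs Hu l b Ti Hin. pose proof (Unf_functional _ _ HT2 _ Hu); subst.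
    destruct (H3 p bs HT l b Ti Hin) as [Ui [S1 S2]]. exists Ui; split; auto.
    apply (SendStep_Unf_iff _ _ _ _ _ HU2), (SendStep_Unf_iff _ _ _ _ _ HU). auto.
  - intros p bs Hu. pose proof (Unf_functional _ _ HT2 _ Hu); subst.
    apply (Recvs_Unf _ _ _ HU2), (Recvs_Unf _ _ _ HU). eauto.
  - intros p bs Hu. pose proof (Unf_functional _ _ HU2 _ Hu); subst.
    apply (Sends_Unf _ _ _ HT2), (Sends_Unf _ _ _ HT). eauto.
  - intros p bs Hu l b Ui Hin. pose proof (Unf_functional _ _ HU2 _ Hu); subst.
    destruct (H6 p bs HU l b Ui Hin) as [Ti [S1 S2]]. exists Ti; split; auto.
    apply (RecvStep_Unf_iff _ _ _ _ _ HT2), (RecvStep_Unf_iff _ _ _ _ _ HT). auto.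
  - intros Hx. pose proof (Unf_functional _ _ HT2 _ Hx); subst.
    assert (Unf U (TFVar X)) by (apply H7; auto).
    pose proof (Unf_functional _ _ HU _ H0); subst. auto.
  - intros Hx. pose proof (Unf_functional _ _ HU2 _ Hx); subst.
    assert (Unf T (TFVar X)) by (apply H7; auto).
    pose proof (Unf_functional _ _ HT _ H0); subst. auto.
Qed.

Lemma asub_unfold_rec_l Th V U : asub Th (TRec V) U -> asub Th (open V (TRec V)) U.
Proof.
  intros H. destruct (asub_wf _ _ _ H) as [W1 W2].
  destruct (Unf_exists _ _ W1) as [Z HZ]. destruct (Unf_exists _ _ W2) as [Z' HZ'].
  apply (asub_coind Th (fun a c => a = open V (TRec V) /\ c = U)); [|auto].
  intros a c [-> ->]. apply (asub_gen_mono Th (asub Th)); auto.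
  apply (asub_gen_Unf Th _ (TRec V) _ U U Z Z'); auto using wf_unfold_rec, asub_gen_asub.
  inversion HZ; subst; auto. exfalso; eapply H0; eauto.
Qed.

(** * Duality *)

Fixpoint dual (T : styp) : styp :=
  match T with
  | TEnd => TEnd
  | TSend p bs => TRecv p (map (fun br => match br with (l, b, V) => (l, b, dual V) end) bs)
  | TRecv p bs => TSend p (map (fun br => match br with (l, b, V) => (l, b, dual V) end) bs)
  | TFVar x => TFVar x
  | TBVar n => TBVar n
  | TRec V => TRec (dual V)
  end.

Lemma dual_send p bs : dual (TSend p bs) = TRecv p (bmap dual bs).
Proof. reflexivity. Qed.
Lemma dual_recv p bs : dual (TRecv p bs) = TSend p (bmap dual bs).
Proof. reflexivity. Qed.

Lemma dual_involutive T : dual (dual T) = T.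
Proof.
  induction T using styp_nested_ind; auto.
  - rewrite dual_send, dual_recv, bmap_comp. f_equal.
    apply bmap_id_in. intros l0 b0 V0 Hin. branch_IH H Hin. auto.
  - rewrite dual_recv, dual_send, bmap_comp. f_equal.
    apply bmap_id_in. intros l0 b0 V0 Hin. branch_IH H Hin. auto.
  - simpl. congruence.
Qed.

Lemma dual_open_rec u V : forall k, dual (open_rec k u V) = open_rec k (dual u) (dual V).
Proof.
  induction V using styp_nested_ind; intros k; auto.
  - rewrite open_rec_send, !dual_send, open_rec_recv, !bmap_comp. f_equal.
    apply bmap_ext_in. intros l0 b0 V0 Hin. branch_IH H Hin. auto.
  - rewrite open_rec_recv, !dual_recv, open_rec_send, !bmap_comp. f_equal.
    apply bmap_ext_in. intros l0 b0 V0 Hin. branch_IH H Hin. auto.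
  - simpl. destruct (Nat.eqb n k); auto.
  - simpl. f_equal. auto.
Qed.

Lemma unguarded_dual T : forall j, unguarded j (dual T) <-> unguarded j T.
Proof. induction T; simpl; intros; try tauto. auto. Qed.

Lemma wf_at_dual Th k T : wf_at Th k T -> wf_at Th k (dual T).
Proof.
  induction 1.
  - constructor.
  - constructor; auto.
  - constructor; auto.
  - rewrite dual_send. constructor.
    + apply bmap_nil_iff; auto.
    + rewrite bmap_labels; auto.
    + intros l b V Hin. apply in_bmap_iff in Hin as [V0 [Hin ->]]. eauto.
  - rewrite dual_recv. constructor.
    + apply bmap_nil_iff; auto.
    + rewrite bmap_labels; auto.
    + intros l b V Hin. apply in_bmap_iff in Hin as [V0 [Hin ->]]. eauto.
  - simpl. constructor; auto. rewrite unguarded_dual. auto.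
Qed.

Lemma wf_dual Th T : wf Th (dual T) <-> wf Th T.
Proof.
  split; intros H; [rewrite <- (dual_involutive T)|]; apply wf_at_dual; auto.
Qed.

Lemma Unf_dual T Z : Unf T Z -> Unf (dual T) (dual Z).
Proof.
  induction 1.
  - simpl. constructor. unfold open in *. rewrite dual_open_rec in IHUnf. auto.
  - constructor. intros V E. destruct T; simpl in E; try discriminate. eapply H; eauto.
Qed.

Lemma Unf_dual_iff T Z : Unf (dual T) Z <-> Unf T (dual Z).
Proof.
  split; intros H; apply Unf_dual in H; rewrite dual_involutive in H; auto.
Qed.

Lemma SendStep_dual p l b T T' : SendStep p l b T T' -> RecvStep p l b (dual T) (dual T').
Proof.
  induction 1 using SendStep_nested_ind.
  - rewrite dual_send. constructor. apply in_bmap. auto.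
  - rewrite !dual_send. apply rs_recv with (bmap dual bsJ); auto.
    + apply incl_map; auto.
    + rewrite bmap_labels; auto.
    + apply bmap_nil_iff; auto.
    + apply (Forall2_bmap (fun x y => RecvStep p l b (dual x) (dual y))); [|auto].
      eapply Forall2_impl; [|eauto]. simpl. tauto.
  - rewrite !dual_recv. constructor.
    apply (Forall2_bmap (fun x y => RecvStep p l b (dual x) (dual y))); [|auto].
    eapply Forall2_impl; [|eauto]. simpl. tauto.
  - simpl. constructor. unfold open in *. rewrite dual_open_rec in IHSendStep. auto.
Qed.

Lemma RecvStep_dual p l b T T' : RecvStep p l b T T' -> SendStep p l b (dual T) (dual T').
Proof.
  induction 1 using RecvStep_nested_ind.
  - rewrite dual_recv. constructor. apply in_bmap. auto.
  - rewrite !dual_recv. apply ss_send with (bmap dual bsJ); auto.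
    + apply incl_map; auto.
    + rewrite bmap_labels; auto.
    + apply bmap_nil_iff; auto.
    + apply (Forall2_bmap (fun x y => SendStep p l b (dual x) (dual y))); [|auto].
      eapply Forall2_impl; [|eauto]. simpl. tauto.
  - rewrite !dual_send. constructor.
    apply (Forall2_bmap (fun x y => SendStep p l b (dual x) (dual y))); [|auto].
    eapply Forall2_impl; [|eauto]. simpl. tauto.
  - simpl. constructor. unfold open in *. rewrite dual_open_rec in IHRecvStep. auto.
Qed.

Lemma Sends_dual p T : Sends p T -> Recvs p (dual T).
Proof.
  induction 1.
  - rewrite dual_send. constructor.
  - rewrite dual_send. apply recvs_recv.
    intros l b V Hin. apply in_bmap_iff in Hin as [V0 [Hin ->]]. eauto.
  - simpl. constructor. auto.
Qed.

Lemma Recvs_dual p T : Recvs p T -> Sends p (dual T).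
Proof.
  induction 1.
  - rewrite dual_recv. constructor.
  - rewrite dual_recv. apply sends_send.
    intros l b V Hin. apply in_bmap_iff in Hin as [V0 [Hin ->]]. eauto.
  - simpl. constructor. auto.
Qed.

Lemma asub_dual Th T U : asub Th T U -> asub Th (dual U) (dual T).
Proof.
  intros H.
  apply (asub_coind Th (fun a c => exists T U, a = dual U /\ c = dual T /\ asub Th T U)); [|eauto].
  clear. intros a c [T [U [-> [-> H]]]].
  destruct (asub_gen_asub _ _ _ H) as [W1 [W2 [H1 [H2 [H3 [H4 H5]]]]]].
  repeat split; try apply wf_dual; auto.
  - intros p bs Hu l b Ti Hin. apply Unf_dual_iff in Hu. rewrite dual_send in Hu.
    destruct (H4 _ _ Hu l b (dual Ti)) as [Tj [S1 S2]]; [apply in_bmap; auto|].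
    exists (dual Tj). split; [apply RecvStep_dual; auto|].
    left. exists Tj, (dual Ti). rewrite dual_involutive. auto.
  - intros p bs Hu. apply Unf_dual_iff in Hu. rewrite dual_recv in Hu. apply Sends_dual. eauto.
  - intros p bs Hu. apply Unf_dual_iff in Hu. rewrite dual_send in Hu. apply Recvs_dual. eauto.
  - intros p bs Hu l b Ui Hin. apply Unf_dual_iff in Hu. rewrite dual_recv in Hu.
    destruct (H1 _ _ Hu l b (dual Ui)) as [Uj [S1 S2]]; [apply in_bmap; auto|].
    exists (dual Uj). split; [apply SendStep_dual; auto|].
    left. exists (dual Ui), Uj. rewrite dual_involutive. auto.
  - intros Hx. apply Unf_dual_iff in Hx. apply Unf_dual_iff. apply H5; auto.
  - intros Hx. apply Unf_dual_iff in Hx. apply Unf_dual_iff. apply H5; auto.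
Qed.

Lemma asub_dual_iff Th T U : asub Th (dual U) (dual T) <-> asub Th T U.
Proof.
  split; intros H; [apply asub_dual in H; rewrite !dual_involutive in H|apply asub_dual]; auto.
Qed.

(** * Reflexivity and the choice rules *)

Definition covers_sends Th q (bs : list branch) W :=
  forall l b X, In (l, b, X) bs -> exists Wl, SendStep q l b W Wl /\ asub Th X Wl.

Lemma covers_sends_recv Th q bs r ws m bm V :
  covers_sends Th q bs (TRecv r ws) -> In (m, bm, V) ws ->
  exists bs',
    Forall2 (fun br br' => fst br = fst br' /\ RecvStep r m bm (snd br) (snd br')) bs bs' /\
    covers_sends Th q bs' V.
Proof.
  intros H Hin.
  assert (Hc : forall br, In br bs ->
            exists br', fst br = fst br' /\ RecvStep r m bm (snd br) (snd br') /\
            exists V', SendStep q (fst (fst br)) (snd (fst br)) V V' /\ asub Th (snd br') V').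
  { intros [[l b] X] HX. destruct (H _ _ _ HX) as [Wl [S1 S2]].
    inversion S1 as [| | ? ? ws' F |]; subst.
    destruct (Forall2_in_l _ _ _ F _ Hin) as [[[m' bm'] V'] [Hin' [E S3]]].
    simpl in E. inversion E; subst.
    destruct (asub_gen_asub _ _ _ S2) as [_ [_ [_ [_ [_ [Hrecv _]]]]]].
    destruct (Hrecv r ws' (Unf_recv _ _) _ _ _ Hin') as [Xm [S4 S5]].
    exists (l, b, Xm). simpl. eauto. }
  apply Forall2_choice in Hc as [bs' Hbs']. exists bs'. split.
  - eapply Forall2_impl; [|exact Hbs']. simpl. tauto.
  - intros l b X HX. destruct (Forall2_in_r _ _ _ Hbs' _ HX) as [x [_ [E [_ [V' [S1 S2]]]]]].
    rewrite E in S1. eauto.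
Qed.

Lemma asub_send_l Th q bs W : wf Th (TSend q bs) -> wf Th W -> covers_sends Th q bs W ->
  asub Th (TSend q bs) W.
Proof.
  intros W1 W2 H.
  apply (asub_coind Th (fun a c => exists q bs, a = TSend q bs /\ wf Th a /\ wf Th c /\
     covers_sends Th q bs c)); [|eauto 10].
  clear. intros a W [q [bs [-> [W1 [W2 H]]]]].
  repeat split; auto.
  - intros p bs0 Hu l b Ti Hin. pose proof (Unf_functional _ _ (Unf_send _ _) _ Hu) as E.
    inversion E; subst. destruct (H _ _ _ Hin) as [Wl [? ?]]; eauto.
  - intros p bs0 Hu. pose proof (Unf_functional _ _ (Unf_send _ _) _ Hu) as E. discriminate.
  - intros r ws Hu. destruct (Nat.eq_dec r q) as [->|Hrq]; [constructor|].
    apply sends_send. intros l b X Hin. destruct (H _ _ _ Hin) as [Wl [S1 S2]].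
    apply (SendStep_Unf_iff _ _ _ _ _ Hu) in S1.
    inversion S1; subst; [congruence|].
    destruct (asub_gen_asub _ _ _ S2) as [_ [_ [_ [_ [Hsends _]]]]]. eapply Hsends, Unf_send.
  - intros r ws Hu m bm V Hin.
    assert (Hc : covers_sends Th q bs (TRecv r ws)).
    { intros l b X HX. setoid_rewrite <- (SendStep_Unf_iff _ _ _ _ _ Hu). auto. }
    destruct (covers_sends_recv _ _ _ _ _ _ _ _ Hc Hin) as [bs' [Hbs' Hcov]].
    exists (TSend q bs'). split; [constructor; auto|].
    left. exists q, bs'. split; auto.
    apply wf_send_inv in W1 as [Hne [Hnd _]]. split; [|split; auto].
    + constructor.
      * eapply Forall2_nonnil; eauto.
      * rewrite <- (Forall2_br_labels _ _ _ Hbs'); [auto | tauto].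
      * intros l b X HX. destruct (Hcov _ _ _ HX) as [? [_ HX']]. exact (proj1 (asub_wf _ _ _ HX')).
    + apply (Unf_wf _ _ _ Hu), wf_recv_inv in W2 as [_ [_ Hb]]. eauto.
  - intros Hx. pose proof (Unf_functional _ _ (Unf_send _ _) _ Hx). discriminate.
  - intros Hx. apply wf_send_inv in W1 as [Hne _].
    destruct bs as [|[[l b] Xh] bs]; [congruence|].
    destruct (H l b Xh) as [Wl [S1 _]]; [simpl; auto|].
    apply (SendStep_Unf_iff _ _ _ _ _ Hx) in S1. inversion S1.
Qed.

Lemma asub_recv_r Th T r ws : wf Th T -> wf Th (TRecv r ws) ->
  (forall m bm V, In (m, bm, V) ws -> exists Tm, RecvStep r m bm T Tm /\ asub Th Tm V) ->
  asub Th T (TRecv r ws).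
Proof.
  intros W1 W2 H. apply asub_dual_iff. rewrite dual_recv. apply asub_send_l.
  - rewrite <- dual_recv. apply wf_dual; auto.
  - apply wf_dual; auto.
  - intros l b X Hin. apply in_bmap_iff in Hin as [V0 [Hin ->]].
    destruct (H _ _ _ Hin) as [Tm [S1 S2]].
    exists (dual Tm). split; [apply RecvStep_dual | apply asub_dual]; auto.
Qed.

Lemma asub_refl Th T : wf Th T -> asub Th T T.
Proof.
  intros Hw. apply (asub_coind Th (fun a c => a = c /\ wf Th a)); [|auto].
  clear. intros a c [<- Hw]. repeat split; auto.
  - intros p bs Hu l b Ti Hin. exists Ti. split.
    + apply (SendStep_Unf_iff _ _ _ _ _ Hu). constructor. auto.
    + left. split; auto. apply (Unf_wf _ _ _ Hu), wf_send_inv in Hw as [_ [_ Hb]]. eauto.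
  - intros p bs Hu. apply (Recvs_Unf _ _ _ Hu). constructor.
  - intros p bs Hu. apply (Sends_Unf _ _ _ Hu). constructor.
  - intros p bs Hu l b Ti Hin. exists Ti. split.
    + apply (RecvStep_Unf_iff _ _ _ _ _ Hu). constructor. auto.
    + left. split; auto. apply (Unf_wf _ _ _ Hu), wf_recv_inv in Hw as [_ [_ Hb]]. eauto.
Qed.

Lemma asub_send_branches Th p I J l b (T U : nat -> styp) : incl J I ->
  wf Th (TSend p (branches J l b T)) -> wf Th (TSend p (branches I l b U)) ->
  (forall i, In i J -> asub Th (T i) (U i)) ->
  asub Th (TSend p (branches J l b T)) (TSend p (branches I l b U)).
Proof.
  intros HJI W1 W2 H. apply asub_send_l; auto.
  intros l' b' X Hin. apply in_map_iff in Hin as [i [E Hi]]. inversion E; subst.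
  exists (U i). split; auto. constructor. apply in_map_iff. eauto.
Qed.

Lemma asub_recv_branches Th p I J l b (T U : nat -> styp) : incl J I ->
  wf Th (TRecv p (branches I l b T)) -> wf Th (TRecv p (branches J l b U)) ->
  (forall i, In i J -> asub Th (T i) (U i)) ->
  asub Th (TRecv p (branches I l b T)) (TRecv p (branches J l b U)).
Proof.
  intros HJI W1 W2 H. apply asub_recv_r; auto.
  intros m bm V Hin. apply in_map_iff in Hin as [i [E Hi]]. inversion E; subst.
  exists (T i). split; auto. constructor. apply in_map_iff. eauto.
Qed.

(** * Transfer of [Recvs] *)

Inductive RecvsH (p : participant) : nat -> styp -> Prop :=
| rh_base n bs : RecvsH p n (TRecv p bs)
| rh_recv n q bs : (forall l b V, In (l, b, V) bs -> RecvsH p n V) -> RecvsH p (S n) (TRecv q bs)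
| rh_rec n V : RecvsH p n V -> RecvsH p (S n) (TRec V).

Lemma RecvsH_mono p n : forall T, RecvsH p n T -> forall m, n <= m -> RecvsH p m T.
Proof.
  induction n; intros T H m Hm.
  - inversion H; subst. constructor.
  - destruct m as [|m]; [lia|]. inversion H; subst; constructor.
    + intros; eapply IHn; eauto; lia.
    + eapply IHn; eauto; lia.
Qed.

Lemma Recvs_RecvsH p T : Recvs p T -> exists n, RecvsH p n T.
Proof.
  induction 1.
  - exists 0. constructor.
  - assert (Hn : exists n, forall l b V, In (l, b, V) bs -> RecvsH p n V).
    { clear H. induction bs as [|[[l0 b0] V0] bs IH]; [exists 0; simpl; tauto|].
      destruct (H0 l0 b0 V0) as [n1 Hn1]; [simpl; auto|].
      destruct IH as [n2 Hn2]; [intros; eapply H0; simpl; eauto|].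
      exists (max n1 n2). intros l b V [E|Hin].
      - inversion E; subst. eapply RecvsH_mono; eauto. lia.
      - eapply RecvsH_mono; eauto. lia. }
    destruct Hn as [n Hn]. exists (S n). constructor. auto.
  - destruct IHRecvs as [n Hn]. exists (S n). constructor; auto.
Qed.

Lemma RecvsH_open_rec p n V : RecvsH p n V -> forall k u, RecvsH p n (open_rec k u V).
Proof.
  induction 1; intros k u.
  - constructor.
  - rewrite open_rec_recv. constructor.
    intros l0 b0 V0 Hin. apply in_bmap_iff in Hin as [V1 [Hin ->]]. eauto.
  - constructor. auto.
Qed.

Lemma RecvsH_Unf p n : forall T, RecvsH p n T ->
  exists q bs, Unf T (TRecv q bs) /\ RecvsH p n (TRecv q bs).
Proof.
  induction n; intros T H; inversion H; subst.
  - exists p, bs. split; [apply Unf_recv | constructor].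
  - exists p, bs. split; [apply Unf_recv | constructor].
  - exists q, bs. split; [apply Unf_recv | auto].
  - apply RecvsH_open_rec with (k := 0) (u := TRec V) in H1.
    destruct (IHn _ H1) as [q [bs [H2 H3]]].
    exists q, bs. split; [constructor; auto | eapply RecvsH_mono; eauto].
Qed.

Lemma RecvsH_RecvStep p n T : RecvsH p n T ->
  forall r m bm T', r <> p -> RecvStep r m bm T T' -> RecvsH p n T'.
Proof.
  intros H r m bm T' Hrp HS. revert n H. induction HS using RecvStep_nested_ind; intros n HH.
  - inversion HH; subst; [congruence|]. eapply RecvsH_mono; eauto.
  - inversion HH; subst; constructor.
    intros l0 b0 V Hin. destruct (Forall2_in_r _ _ _ H3 _ Hin) as [[[l1 b1] X] [Hx [_ [_ IH]]]].
    apply IH. eauto.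
  - inversion HH.
  - inversion HH; subst. eapply RecvsH_mono; [apply IHHS; apply RecvsH_open_rec; eauto | lia].
Qed.

(* The outer induction is on the height of [Recvs p T], the inner one on that of [Recvs q U],
   where [q] is the participant of the first input of [T]. *)
Lemma asub_RecvsH Th p : forall h T, RecvsH p h T -> forall U, asub Th T U -> Recvs p U.
Proof.
  induction h as [h IHo] using lt_wf_ind. intros T HT U HTU.
  destruct (RecvsH_Unf _ _ _ HT) as [q [bs [Hu Hq]]].
  destruct (asub_gen_asub _ _ _ HTU) as [_ [_ [_ [Hrecvs _]]]].
  pose proof (Hrecvs _ _ Hu) as HRq.
  destruct (Nat.eq_dec q p) as [->|Hqp]; [exact HRq|].
  inversion Hq as [|n0 ? ? Hbr|]; subst; [congruence|]. clear Hq HT Hrecvs.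
  destruct (Recvs_RecvsH _ _ HRq) as [g Hg]. clear HRq.
  revert U T bs Hu HTU Hbr Hg.
  induction g as [g IHi] using lt_wf_ind. intros U T bs Hu HTU Hbr Hg.
  destruct (RecvsH_Unf _ _ _ Hg) as [r [ws [HuU Hr]]].
  apply (Recvs_Unf _ _ _ HuU).
  destruct (Nat.eq_dec r p) as [->|Hrp]; [constructor|].
  apply recvs_recv. intros m bm W Hin.
  destruct (asub_gen_asub _ _ _ HTU) as [_ [_ [_ [_ [_ [Hrecv _]]]]]].
  destruct (Hrecv _ _ HuU _ _ _ Hin) as [Tm [S1 S2]].
  apply (RecvStep_Unf_iff _ _ _ _ _ Hu) in S1.
  destruct (Nat.eq_dec r q) as [->|Hrq].
  - inversion S1; subst; [|congruence]. eapply (IHo n0); [lia | eapply Hbr; eauto | eauto].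
  - inversion S1 as [|? ? bsJ bs' _ Hincl _ _ F| |]; subst; [congruence|].
    inversion Hr as [|g' ? ? HrW|]; subst; [congruence|].
    eapply (IHi g'); [lia | apply Unf_recv | eauto | | eauto].
    intros l0 b0 V Hin'. destruct (Forall2_in_r _ _ _ F _ Hin') as [[[l1 b1] X] [Hx [_ Sx]]].
    eapply RecvsH_RecvStep; [| eauto | exact Sx]. eapply Hbr, Hincl. eauto.
Qed.

Lemma asub_Recvs Th p T U : Recvs p T -> asub Th T U -> Recvs p U.
Proof. intros H1 H2. destruct (Recvs_RecvsH _ _ H1) as [h Hh]. eapply asub_RecvsH; eauto. Qed.

Lemma asub_Sends Th p T U : Sends p U -> asub Th T U -> Sends p T.
Proof.
  intros H1 H2. apply Sends_dual in H1. apply asub_dual in H2.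
  rewrite <- (dual_involutive T). apply Recvs_dual. eapply asub_Recvs; eauto.
Qed.

(** * Transfer of outputs and transitivity *)

Inductive SendStepH (p : participant) (l : label) (b : ground) : nat -> styp -> styp -> Prop :=
| sh_base n bs V : In (l, b, V) bs -> SendStepH p l b n (TSend p bs) V
| sh_send n q bsI bsJ bs' :
    p <> q -> incl bsJ bsI -> NoDup (map br_label bsJ) -> bsJ <> [] ->
    Forall2 (fun br br' => fst br = fst br' /\ SendStepH p l b n (snd br) (snd br')) bsJ bs' ->
    SendStepH p l b (S n) (TSend q bsI) (TSend q bs')
| sh_recv n q bs bs' :
    Forall2 (fun br br' => fst br = fst br' /\ SendStepH p l b n (snd br) (snd br')) bs bs' ->
    SendStepH p l b (S n) (TRecv q bs) (TRecv q bs')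
| sh_rec n V U' : SendStepH p l b n (open V (TRec V)) U' -> SendStepH p l b (S n) (TRec V) U'.

Lemma SendStepH_mono p l b n : forall T T', SendStepH p l b n T T' ->
  forall m, n <= m -> SendStepH p l b m T T'.
Proof.
  induction n; intros T T' H m Hm.
  - inversion H; subst. constructor; auto.
  - destruct m as [|m]; [lia|]. inversion H; subst.
    + constructor; auto.
    + eapply sh_send; eauto. eapply Forall2_impl; [|eauto].
      simpl. intros a c [E H']. split; auto. apply IHn; auto. lia.
    + eapply sh_recv; eauto. eapply Forall2_impl; [|eauto].
      simpl. intros a c [E H']. split; auto. apply IHn; auto. lia.
    + apply sh_rec. apply IHn; auto. lia.
Qed.

Lemma SendStepH_SendStep p l b n : forall T T', SendStepH p l b n T T' -> SendStep p l b T T'.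
Proof.
  induction n; intros T T' H; inversion H; subst.
  - constructor; auto.
  - constructor; auto.
  - eapply ss_send; eauto. eapply Forall2_impl; [|eauto]. simpl. intuition.
  - eapply ss_recv; eauto. eapply Forall2_impl; [|eauto]. simpl. intuition.
  - apply ss_rec. apply IHn; auto.
Qed.

Lemma Forall2_common_height p l b (xs ys : list branch) :
  Forall2 (fun br br' => fst br = fst br' /\ exists n, SendStepH p l b n (snd br) (snd br'))
    xs ys ->
  exists n, Forall2 (fun br br' => fst br = fst br' /\ SendStepH p l b n (snd br) (snd br')) xs ys.
Proof.
  induction 1; [exists 0; constructor|].
  destruct H as [E [n Hn]]. destruct IHForall2 as [k Hk]. exists (max n k). constructor.
  - split; auto. eapply SendStepH_mono; eauto. lia.
  - eapply Forall2_impl; [|eauto]. simpl. intros a c [E' H'].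
    split; auto. eapply SendStepH_mono; eauto. lia.
Qed.

Lemma SendStep_SendStepH p l b T T' : SendStep p l b T T' -> exists n, SendStepH p l b n T T'.
Proof.
  induction 1 using SendStep_nested_ind.
  - exists 0. constructor; auto.
  - destruct (Forall2_common_height p l b bsJ bs') as [n Hn].
    + eapply Forall2_impl; [|eauto]. simpl. tauto.
    + exists (S n). eapply sh_send; eauto.
  - destruct (Forall2_common_height p l b bs bs') as [n Hn].
    + eapply Forall2_impl; [|eauto]. simpl. tauto.
    + exists (S n). eapply sh_recv; eauto.
  - destruct IHSendStep as [n Hn]. exists (S n). constructor; auto.
Qed.

Lemma RecvStep_SendStepH_commute p l b r m bm T Tm : RecvStep r m bm T Tm ->
  forall h T', SendStepH p l b h T T' -> exists Y, SendStepH p l b h Tm Y /\ RecvStep r m bm T' Y.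
Proof.
  induction 1 using RecvStep_nested_ind; intros h T' HS.
  - inversion HS as [| |n0 q0 bs0 bs1 HF|]; subst.
    destruct (Forall2_in_l _ _ _ HF _ H) as [[[m' bm'] Y] [HY [E HY']]].
    simpl in E. inversion E; subst. exists Y.
    split; [eapply SendStepH_mono; eauto | constructor; auto].
  - inversion HS as [| |n0 q0 bs0 bs1 HF|]; subst.
    destruct (Forall2_square _ (fun j d => In d bs1 /\ fst j = fst d)
       (fun e y => fst e = fst y /\ SendStepH p l b n0 (snd e) (snd y))
       (fun d y => fst d = fst y /\ RecvStep r m bm (snd d) (snd y)) bsJ bs' H3)
      as [ds [Ys [F1 [F2 F3]]]].
    + intros x y Hx [E [Sx IH]].
      destruct (Forall2_in_l _ _ _ HF _ (H0 _ Hx)) as [d [Hd [Ed Sd]]].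
      destruct (IH _ _ Sd) as [Y [SY RY]].
      exists d, (fst y, Y). simpl. repeat split; auto. congruence.
    + destruct (Forall2_selection _ bs1 _ _ F1) as [Hincl [Hnd Hne]]; auto.
      exists (TRecv q Ys). split; [apply sh_recv | apply rs_recv with ds]; auto.
  - inversion HS as [n0 bs0 V Hin| n0 q0 bsI bsJ ds Hpq Hincl Hnd Hne HF| |]; subst.
    + destruct (Forall2_in_l _ _ _ H _ Hin) as [[[l' b'] Y] [Hy [E [Sy _]]]].
      simpl in E. inversion E; subst. exists Y. split; [constructor|]; auto.
    + destruct (Forall2_square _ (fun j e => In e bs' /\ fst j = fst e)
       (fun d y => fst d = fst y /\ RecvStep r m bm (snd d) (snd y))
       (fun e y => fst e = fst y /\ SendStepH p l b n0 (snd e) (snd y)) bsJ ds HF)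
        as [es [Ys [F1 [F2 F3]]]].
      * intros x d Hx [E Sx].
        destruct (Forall2_in_l _ _ _ H _ (Hincl _ Hx)) as [e [He [Ee [Re IH]]]].
        destruct (IH _ _ Sx) as [Y [SY RY]].
        exists e, (fst d, Y). simpl. repeat split; auto. congruence.
      * destruct (Forall2_selection _ bs' _ _ F1) as [Hincl' [Hnd' Hne']]; auto.
        exists (TSend q Ys). split; [apply sh_send with es | apply rs_send]; auto.
  - inversion HS as [| | |n0 V0 U0 H']; subst.
    destruct (IHRecvStep _ _ H') as [Y [SY RY]].
    exists Y. split; [eapply SendStepH_mono; eauto | auto].
Qed.

Inductive widen : styp -> styp -> Prop :=
| wd_end : widen TEnd TEnd
| wd_fvar x : widen (TFVar x) (TFVar x)
| wd_bvar n : widen (TBVar n) (TBVar n)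
| wd_send p xs cs :
    (forall l b a, In (l, b, a) xs -> exists c, In (l, b, c) cs /\ widen a c) ->
    widen (TSend p xs) (TSend p cs)
| wd_recv p xs cs :
    Forall2 (fun x y => fst x = fst y /\ widen (snd x) (snd y)) xs cs ->
    widen (TRecv p xs) (TRecv p cs)
| wd_rec V W : widen V W -> widen (TRec V) (TRec W).

Lemma widen_refl T : widen T T.
Proof.
  induction T using styp_nested_ind; constructor; auto.
  - intros l b a Hin. exists a. split; auto. branch_IH H Hin. auto.
  - induction bs as [|br bs IH]; constructor; inversion H; subst; auto.
Qed.

Lemma widen_trans A : forall B C, widen A B -> widen B C -> widen A C.
Proof.
  induction A using styp_nested_ind; intros B C H1 H2;
    inversion H1 as [| | |? ? cs1 Hm1| ? ? cs1 F1| ? W1 P1]; subst;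
    inversion H2 as [| | |? ? cs2 Hm2| ? ? cs2 F2| ? W2 P2]; subst; try constructor.
  - intros l b a Hin. destruct (Hm1 _ _ _ Hin) as [c [Hc Pc]].
    destruct (Hm2 _ _ _ Hc) as [d [Hd Pd]].
    exists d. split; auto. branch_IH H Hin. eauto.
  - eapply Forall2_trans_on; eauto. simpl. intros x y z Hx [E1 Q1] [E2 Q2].
    split; [congruence | eauto].
  - eauto.
Qed.

Lemma widen_open_rec u u' : widen u u' ->
  forall V W, widen V W -> forall k, widen (open_rec k u V) (open_rec k u' W).
Proof.
  intros Hu V. induction V using styp_nested_ind; intros W HW k;
    inversion HW as [| | |? ? cs1 Hm1| ? ? cs1 F1| ? W1 P1]; subst.
  - constructor.
  - rewrite !open_rec_send. constructor.
    intros l b a Hin. apply in_bmap_iff in Hin as [a0 [Hin ->]].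
    destruct (Hm1 _ _ _ Hin) as [c [Hc Pc]].
    exists (open_rec k u' c). split; [apply in_bmap; auto | branch_IH H Hin; auto].
  - rewrite !open_rec_recv. constructor.
    clear HW. revert cs1 F1.
    induction bs as [|[[l0 b0] V0] bs IH]; intros cs F; inversion F; subst; constructor;
      inversion H; subst.
    + destruct y as [[l1 b1] V1]. destruct H2 as [E P]. simpl in *. auto.
    + apply IH; auto.
  - constructor.
  - simpl. destruct (Nat.eqb n k); [auto | constructor].
  - simpl. constructor. auto.
Qed.

Lemma widen_Unf U Z : Unf U Z -> forall V, widen U V -> exists Z', Unf V Z' /\ widen Z Z'.
Proof.
  induction 1; intros W HW.
  - inversion HW; subst. destruct (IHUnf (open W0 (TRec W0))) as [Z' [HZ1 HZ2]].
    + apply widen_open_rec; auto.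
    + exists Z'. split; auto. constructor. auto.
  - exists W. split; auto. constructor. intros V E. subst. inversion HW; subst. eapply H; eauto.
Qed.

Lemma widen_Recvs p U : Recvs p U -> forall V, widen U V -> Recvs p V.
Proof.
  induction 1; intros W HW; inversion HW as [| | |? ? cs1 Hm1| ? ? cs1 F1| ? W1 P1]; subst.
  - constructor.
  - apply recvs_recv. intros l b V Hin.
    destruct (Forall2_in_r _ _ _ F1 _ Hin) as [[[l' b'] X] [HX [E P]]].
    simpl in *. inversion E; subst. eauto.
  - constructor. auto.
Qed.

Lemma widen_SendStep p l b A A' : SendStep p l b A A' ->
  forall C, widen A C -> exists C', SendStep p l b C C' /\ widen A' C'.
Proof.
  induction 1 using SendStep_nested_ind; intros C HC.
  - inversion HC as [| | |? ? cs Hm| |]; subst.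
    destruct (Hm _ _ _ H) as [c [Hc Pc]]. exists c. split; [constructor|]; auto.
  - inversion HC as [| | |? ? cs Hm| |]; subst.
    destruct (Forall2_square _ (fun j c => In c cs /\ fst j = fst c /\ widen (snd j) (snd c))
       (fun a' c' => fst a' = fst c' /\ widen (snd a') (snd c'))
       (fun c c' => fst c = fst c' /\ SendStep p l b (snd c) (snd c')) bsJ bs' H3)
      as [ccs [C's [F1 [F2 F3]]]].
    + intros [[lx bx] X] y Hx [E [Sx IH]].
      destruct (Hm _ _ _ (H0 _ Hx)) as [c [Hc Pc]].
      destruct (IH _ Pc) as [c' [S' P']].
      exists (lx, bx, c), (fst y, c'). simpl in *. repeat split; auto.
    + destruct (Forall2_selection _ cs _ _ F1) as [Hincl [Hnd Hne]]; [simpl; tauto | auto..].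
      exists (TSend q C's). split; [apply ss_send with ccs; auto | constructor].
      intros l0 b0 a Hin. destruct (Forall2_in_l _ _ _ F2 _ Hin) as [[[l1 b1] c] [Hc [E P]]].
      simpl in *. inversion E; subst. eauto.
  - inversion HC as [| | | |? ? cs F|]; subst.
    destruct (Forall2_cospan _ _ (fun x w => fst x = fst w)
       (fun y w => fst y = fst w /\ widen (snd y) (snd w))
       (fun z w => fst z = fst w /\ SendStep p l b (snd z) (snd w)) bs bs' cs H F)
      as [ws [F1 [F2 F3]]].
    + intros x y z Hx [E [Sx IH]] [E' Pz].
      destruct (IH _ Pz) as [c' [S' P']].
      exists (fst y, c'). simpl. repeat split; auto. congruence.
    + exists (TRecv q ws). split; constructor; auto.
  - inversion HC; subst. destruct (IHSendStep (open W (TRec W))) as [C' [S' P']].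
    + apply widen_open_rec; auto.
    + exists C'. split; auto. constructor; auto.
Qed.

Lemma SendStep_swap q l bq U U1 : SendStep q l bq U U1 ->
  forall p lp b U1', p <> q -> SendStep p lp b U1 U1' ->
  exists U', SendStep p lp b U U' /\ SendStep q l bq U' U1'.
Proof.
  induction 1 using SendStep_nested_ind; intros p lp b U1' Hpq HS.
  - exists (TSend q [(l, bq, U1')]). split.
    + apply ss_send with [(l, bq, V)]; auto.
      * intros x [<-|[]]. auto.
      * repeat constructor. simpl. tauto.
      * discriminate.
    + constructor. simpl. auto.
  - inversion HS as [bs0 V0 Hin| ? ? K K' Hpq0 HinclK HndK HneK HFK| |]; subst.
    + destruct (Forall2_in_r _ _ _ H3 _ Hin) as [[[lj bj] Vj] [Hj [E [Sj _]]]].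
      simpl in E. inversion E; subst. exists Vj. split; [constructor|]; auto.
    + destruct (Forall2_square _ (fun k j => In j bsI /\ fst k = fst j)
         (fun k' w => fst k' = fst w /\ SendStep q l bq (snd w) (snd k'))
         (fun j w => fst j = fst w /\ SendStep p lp b (snd j) (snd w)) K K' HFK)
        as [js [ws [F1 [F2 F3]]]].
      * intros k k' Hk [E Sk].
        destruct (Forall2_in_r _ _ _ H3 _ (HinclK _ Hk)) as [j [Hj [Ej [Sj IH]]]].
        destruct (IH _ _ _ _ Hpq Sk) as [w [Sw1 Sw2]].
        exists j, (fst k', w). simpl. repeat split; auto; congruence.
      * destruct (Forall2_selection _ bsI _ _ F1) as [Hincl' [Hnd' Hne']]; [tauto | auto..].
        exists (TSend q0 ws). split; [apply ss_send with js; auto|].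
        apply ss_send with ws; auto using incl_refl.
        -- rewrite <- (Forall2_br_labels _ _ _ F3); [auto | tauto].
        -- eapply Forall2_nonnil; eauto.
        -- apply Forall2_flip in F2. eapply Forall2_impl; [|exact F2]. intros a c [E S]. auto.
  - inversion HS as [| |? ? bs'' HF0|]; subst.
    destruct (Forall2_compose_factor _ _
       (fun x w => fst x = fst w /\ SendStep p lp b (snd x) (snd w))
       (fun w z => fst w = fst z /\ SendStep q l bq (snd w) (snd z)) bs bs' bs'' H HF0)
      as [ws [F1 F2]].
    + intros x y z Hx [E [Sx IH]] [E' Sy]. destruct (IH _ _ _ _ Hpq Sy) as [w [Sw1 Sw2]].
      exists (fst x, w). simpl. repeat split; auto. congruence.
    + exists (TRecv q0 ws). split; constructor; auto.
  - destruct (IHSendStep _ _ _ _ Hpq HS) as [Ux [S1 S2]].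
    exists Ux. split; auto. constructor. auto.
Qed.

Section JoinSendSteps.
Variables (p : participant) (l : label) (b : ground).

Definition joinable (V A : styp) :=
  forall B, SendStep p l b V B -> exists C, SendStep p l b V C /\ widen A C /\ widen B C.

Lemma join_branches (ZA ZB : list (branch * branch)) :
  NoDup (map br_label (map fst ZB)) ->
  (forall z, In z ZA -> fst (fst z) = fst (snd z) /\ SendStep p l b (snd (fst z)) (snd (snd z)) /\
                       joinable (snd (fst z)) (snd (snd z))) ->
  (forall z, In z ZB -> fst (fst z) = fst (snd z) /\ SendStep p l b (snd (fst z)) (snd (snd z))) ->
  exists cs, Forall2 (fun z c => fst c = fst (fst z) /\ SendStep p l b (snd (fst z)) (snd c) /\
     widen (snd (snd z)) (snd c) /\
     forall zb, In zb ZB -> fst zb = fst z -> widen (snd (snd zb)) (snd c)) ZA cs.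
Proof.
  intros HndB HZA HZB. apply Forall2_choice. intros [j a] Hz.
  destruct (HZA _ Hz) as [Eja [Sja Hjoin]]. simpl in *.
  destruct (classic (exists zb, In zb ZB /\ fst zb = j)) as [[zb [Hzb Ezb]]|Hno].
  - destruct (HZB _ Hzb) as [_ Sjb]. rewrite Ezb in Sjb.
    destruct (Hjoin _ Sjb) as [C [SC [PA PB]]].
    exists (fst j, C). simpl. repeat split; auto.
    intros zb' Hzb' Ezb'. simpl in Ezb'. replace zb' with zb; [exact PB|].
    apply (NoDup_map_inj_in (fun z => br_label (fst z)) ZB); auto.
    + rewrite <- map_map. auto.
    + destruct zb, zb'. simpl in *. congruence.
  - exists (fst j, snd a). simpl. repeat split; auto using widen_refl.
    intros zb Hzb Ezb. exfalso. eauto.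
Qed.

Lemma SendStep_join_send q bsI (ZA ZB : list (branch * branch)) :
  p <> q -> NoDup (map br_label bsI) ->
  incl (map fst ZA) bsI -> NoDup (map br_label (map fst ZA)) -> map fst ZA <> [] ->
  incl (map fst ZB) bsI -> NoDup (map br_label (map fst ZB)) ->
  (forall z, In z ZA -> fst (fst z) = fst (snd z) /\ SendStep p l b (snd (fst z)) (snd (snd z)) /\
                       joinable (snd (fst z)) (snd (snd z))) ->
  (forall z, In z ZB -> fst (fst z) = fst (snd z) /\ SendStep p l b (snd (fst z)) (snd (snd z))) ->
  exists C, SendStep p l b (TSend q bsI) C /\
            widen (TSend q (map snd ZA)) C /\ widen (TSend q (map snd ZB)) C.
Proof.
  intros Hpq HndI HinclA HndA HneA HinclB HndB HZA HZB.
  destruct (join_branches ZA ZB HndB HZA HZB) as [cs Hcs].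
  set (labels_A := map br_label (map fst ZA)).
  set (ZB' := filter (fun zb : branch * branch =>
                if in_dec Nat.eq_dec (br_label (fst zb)) labels_A then false else true) ZB).
  assert (HZB' : forall zb, In zb ZB' <-> In zb ZB /\ ~ In (br_label (fst zb)) labels_A).
  { intros zb. unfold ZB'. rewrite filter_In. destruct (in_dec _ _ _); intuition discriminate. }
  exists (TSend q (cs ++ map snd ZB')). split; [|split].
  - apply ss_send with (map fst ZA ++ map fst ZB'); auto.
    + intros x Hx. apply in_app_iff in Hx as [Hx|Hx]; auto.
      apply in_map_iff in Hx as [z [<- Hz]]. apply HinclB, in_map, HZB'. auto.
    + rewrite map_app. apply NoDup_app; auto.
      * rewrite map_map. apply NoDup_map_filter. rewrite <- map_map. auto.
      * intros x Hx1 Hx2. apply in_map_iff in Hx2 as [y [<- Hy]].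
        apply in_map_iff in Hy as [z [<- Hz]]. apply HZB' in Hz. tauto.
    + intros E. apply app_eq_nil in E as [E _]. auto.
    + apply Forall2_app.
      * apply Forall2_map_l. eapply Forall2_impl; [|exact Hcs]. simpl. intuition.
      * apply Forall2_unzip. intros z Hz. apply HZB' in Hz. apply HZB. tauto.
  - constructor. intros l0 b0 a Hin. apply in_map_iff in Hin as [z [Ez Hz]].
    destruct (Forall2_in_l _ _ _ Hcs _ Hz) as [c [Hc [Ec [_ [Pc _]]]]].
    destruct (HZA _ Hz) as [Eza _]. exists (snd c). rewrite Ez in Pc, Eza. split; auto.
    apply in_app_iff. left. destruct c as [[? ?] ?]. simpl in *. congruence.
  - constructor. intros l0 b0 x Hin. apply in_map_iff in Hin as [zb [Ezb Hzb]].
    destruct (HZB _ Hzb) as [Ejb _]. rewrite Ezb in Ejb.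
    destruct (in_dec Nat.eq_dec (br_label (fst zb)) labels_A) as [Hi|Hni].
    + apply in_map_iff in Hi as [j [Ej Hj]].
      assert (j = fst zb) as ->.
      { apply (NoDup_map_inj_in br_label bsI); auto. apply HinclB, in_map. auto. }
      apply in_map_iff in Hj as [z [Ez Hz]].
      destruct (Forall2_in_l _ _ _ Hcs _ Hz) as [c [Hc [Ec [_ [_ Pc]]]]].
      exists (snd c). split.
      * apply in_app_iff. left. destruct c as [[? ?] ?]. simpl in *. congruence.
      * specialize (Pc _ Hzb (eq_sym Ez)). rewrite Ezb in Pc. auto.
    + exists x. split; auto using widen_refl.
      apply in_app_iff. right. rewrite <- Ezb. apply in_map, HZB'. auto.
Qed.

Lemma SendStep_join Th U A : SendStep p l b U A -> wf Th U -> joinable U A.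
Proof.
  induction 1 using SendStep_nested_ind; intros Hw B HB.
  - inversion HB as [bs0 V0 Hin| ? ? ? ? Hpq| |]; subst; [|congruence].
    apply wf_send_inv in Hw as [_ [Hnd _]].
    assert (E : (l, b, V) = (l, b, B)) by (eapply (NoDup_map_inj_in br_label); eauto).
    inversion E; subst. exists B. repeat split; auto using widen_refl.
  - apply wf_send_inv in Hw as [_ [HndI HwI]].
    inversion HB as [| ? ? JB bsB _ HinclB HndB _ HFB | |]; subst; [congruence|].
    destruct (Forall2_zip _ _ _ H3) as [ZA [-> [-> HZA]]].
    destruct (Forall2_zip _ _ _ HFB) as [ZB [-> [-> HZB]]].
    apply SendStep_join_send; auto.
    intros z Hz. destruct (HZA _ Hz) as [E [S IH]]. repeat split; auto.
    destruct z as [[[lz bz] Vz] a]. apply IH. apply (HwI lz bz), H0. apply (in_map fst) in Hz. auto.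
  - apply wf_recv_inv in Hw as [_ [_ HwI]].
    inversion HB as [| | ? ? bsB HFB|]; subst.
    destruct (Forall2_cospan _ _ (fun x w => fst x = fst w /\ SendStep p l b (snd x) (snd w))
       (fun y w => fst y = fst w /\ widen (snd y) (snd w))
       (fun z w => fst z = fst w /\ widen (snd z) (snd w)) bs bs' bsB H HFB) as [ws [F1 [F2 F3]]].
    + intros [[lx bx] X] y z Hx [E [Sx IH]] [E' Sz].
      destruct (IH (HwI _ _ _ Hx) _ Sz) as [C [SC [PA PB]]].
      exists (lx, bx, C). simpl in *. repeat split; auto; congruence.
    + exists (TRecv q ws). repeat split; constructor; auto.
  - inversion HB as [| | |V0 B0 HB']; subst.
    destruct (IHSendStep (wf_unfold_rec _ _ Hw) _ HB') as [C [SC [PA PB]]].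
    exists C. repeat split; auto. constructor; auto.
Qed.

Lemma SendStep_join_list Th U Ws :
  wf Th U -> Ws <> [] -> (forall W, In W Ws -> SendStep p l b U W) ->
  exists C, SendStep p l b U C /\ forall W, In W Ws -> widen W C.
Proof.
  intros Hw. induction Ws as [|W Ws IH]; intros Hne HS; [congruence|].
  destruct Ws as [|W' Ws'].
  - exists W. split; [apply HS; simpl; auto|]. intros W0 [<-|[]]. apply widen_refl.
  - destruct IH as [C' [SC' PC']]; [congruence | intros; apply HS; simpl; auto|].
    destruct (SendStep_join Th U W (HS W (or_introl eq_refl)) Hw _ SC') as [C [SC [P1 P2]]].
    exists C. split; auto. intros W0 [<-|HW0]; eauto using widen_trans.
Qed.
End JoinSendSteps.

Lemma asub_widen Th T U V : asub Th T U -> widen U V -> wf Th V -> asub Th T V.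
Proof.
  intros H1 H2 H3.
  apply (asub_coind Th (fun a c => exists U, asub Th a U /\ widen U c /\ wf Th c)); [|eauto].
  clear. intros T V [U [HTU [HUV WV]]].
  destruct (asub_gen_asub _ _ _ HTU) as [W1 [W2 [S1 [S2 [S3 [S4 S5]]]]]].
  destruct (Unf_exists _ _ W2) as [U0 HU0].
  destruct (widen_Unf _ _ HU0 _ HUV) as [V0 [HV0 P0]].
  repeat split; auto.
  - intros p bs Hu l b Ti Hin. destruct (S1 _ _ Hu _ _ _ Hin) as [Ui [SUi AUi]].
    destruct (widen_SendStep _ _ _ _ _ SUi _ HUV) as [C' [SC PC]].
    exists C'. split; auto. left. exists Ui. repeat split; auto. eapply SendStep_wf; eauto.
  - intros p bs Hu. eapply widen_Recvs; eauto.
  - intros r ws Hu. pose proof (Unf_functional _ _ HV0 _ Hu); subst.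
    inversion P0; subst. eauto.
  - intros r ws Hu m bm Vm Hin. pose proof (Unf_functional _ _ HV0 _ Hu); subst.
    inversion P0 as [| | | |? xs ? F|]; subst.
    destruct (Forall2_in_r _ _ _ F _ Hin) as [[[m' bm'] Um] [HUm [E PUm]]].
    simpl in *. inversion E; subst.
    destruct (S4 _ _ HU0 _ _ _ HUm) as [Tm [RTm ATm]].
    exists Tm. split; auto. left. exists Um. repeat split; auto.
    apply (Unf_wf _ _ _ HV0), wf_recv_inv in WV as [_ [_ Hb]]. eauto.
  - intros Hx. apply S5 in Hx; auto. pose proof (Unf_functional _ _ HU0 _ Hx); subst.
    inversion P0; subst. auto.
  - intros Hx. pose proof (Unf_functional _ _ HV0 _ Hx); subst.
    inversion P0; subst. apply S5; auto.
Qed.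

Definition transfers_SendStepH Th p l b n := forall T T', SendStepH p l b n T T' ->
  forall U, asub Th T U -> exists U', SendStep p l b U U' /\ asub Th T' U'.

Section SendStepTransfer.
Variables (Th : tvar -> Prop) (p : participant) (l : label) (b : ground) (n : nat).
Hypothesis IH : transfers_SendStepH Th p l b n.

Lemma asub_SendStepH_send q bsI bsJ bs' U : p <> q -> incl bsJ bsI ->
  NoDup (map br_label bsJ) -> bsJ <> [] ->
  Forall2 (fun br br' => fst br = fst br' /\ SendStepH p l b n (snd br) (snd br')) bsJ bs' ->
  asub Th (TSend q bsI) U -> exists U', SendStep p l b U U' /\ asub Th (TSend q bs') U'.
Proof.
  intros Hpq Hincl Hnd Hne HF HTU.
  destruct (asub_gen_asub _ _ _ HTU) as [W1 [W2 [Hsend _]]].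
  assert (Heach : forall t', In t' bs' -> exists W Y, SendStep p l b U W /\
             SendStep q (fst (fst t')) (snd (fst t')) W Y /\ asub Th (snd t') Y).
  { intros t' Ht'. destruct (Forall2_in_r _ _ _ HF _ Ht') as [[[lj bj] Xj] [Hj [Ej Sj]]].
    simpl in *. rewrite <- Ej.
    destruct (Hsend q bsI (Unf_send _ _) lj bj Xj (Hincl _ Hj)) as [Uj [SUj AUj]].
    destruct (IH _ _ Sj Uj AUj) as [Uj' [SUj' AUj']].
    destruct (SendStep_swap _ _ _ _ _ SUj p l b _ Hpq SUj') as [W [SW1 SW2]].
    exists W, Uj'. auto. }
  apply Forall2_choice in Heach as [Ws HWs].
  destruct (SendStep_join_list p l b Th U Ws W2) as [C [SC PC]].
  - eapply Forall2_nonnil; [exact HWs|]. eapply Forall2_nonnil; eauto.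
  - intros W HW. destruct (Forall2_in_r _ _ _ HWs _ HW) as [t' [_ [Y [S _]]]]. auto.
  - exists C. split; auto. apply asub_send_l; [| eapply SendStep_wf; eauto |].
    + eapply SendStep_wf; [|exact W1]. eapply ss_send; eauto.
      eapply Forall2_impl; [|exact HF]. simpl. intros ? ? [? ?]. eauto using SendStepH_SendStep.
    + intros l' b' X Hin. destruct (Forall2_in_l _ _ _ HWs _ Hin) as [W [HW [Y [_ [SY AY]]]]].
      simpl in *. destruct (widen_SendStep _ _ _ _ _ SY _ (PC _ HW)) as [C' [SC' PC']].
      exists C'. split; auto. eapply asub_widen; eauto.
      eapply SendStep_wf; [exact SC'|]. eapply SendStep_wf; eauto.
Qed.

Lemma asub_SendStepH_recv q bs bs' : forall g U,
  Forall2 (fun br br' => fst br = fst br' /\ SendStepH p l b n (snd br) (snd br')) bs bs' ->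
  asub Th (TRecv q bs) U -> RecvsH q g U ->
  exists U', SendStep p l b U U' /\ asub Th (TRecv q bs') U'.
Proof.
  intros g. revert bs bs'. induction g as [g IHg] using lt_wf_ind. intros bs bs' U HF HTU Hg.
  assert (HS : SendStepH p l b (S n) (TRecv q bs) (TRecv q bs')) by (constructor; auto).
  destruct (asub_gen_asub _ _ _ HTU) as [W1 [W2 [_ [_ [_ [Hrecv _]]]]]].
  destruct (RecvsH_Unf _ _ _ Hg) as [r [ws [HuU Hr]]].
  assert (Heach : forall w, In w ws ->
             exists w', fst w = fst w' /\ SendStep p l b (snd w) (snd w') /\
             exists Y, RecvStep r (fst (fst w)) (snd (fst w)) (TRecv q bs') Y /\
                       asub Th Y (snd w')).
  { intros [[m bm] W] Hin. simpl.
    destruct (Hrecv _ _ HuU _ _ _ Hin) as [Tm [RTm ATm]].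
    destruct (Nat.eq_dec r q) as [->|Hrq].
    - inversion RTm as [bs0 V0 Hin0| ? ? ? ? Hqq| |]; subst; [|congruence].
      destruct (Forall2_in_l _ _ _ HF _ Hin0) as [[[m' bm'] Y] [HY [E SY]]].
      simpl in *. inversion E; subst.
      destruct (IH _ _ SY W ATm) as [W' [SW' AW']].
      exists (m', bm', W'). simpl. repeat split; auto. exists Y. split; auto. constructor. auto.
    - destruct (RecvStep_SendStepH_commute _ _ _ _ _ _ _ _ RTm _ _ HS) as [Y [SY RY]].
      inversion RTm as [| ? ? bsJ bs'' _ _ _ _ _| |]; subst; [congruence|].
      inversion SY as [| |? ? ? ys HFY|]; subst.
      inversion Hr as [|g' ? ? HrW|]; subst; [congruence|].
      destruct (IHg g' ltac:(lia) bs'' ys W HFY ATm) as [W' [SW' AW']]; [eapply HrW; eauto|].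
      exists (m, bm, W'). simpl. eauto. }
  apply Forall2_choice in Heach as [ws' Hws'].
  exists (TRecv r ws'). split.
  - apply (SendStep_Unf_iff _ _ _ _ _ HuU). constructor.
    eapply Forall2_impl; [|exact Hws']. simpl. tauto.
  - apply (Unf_wf _ _ _ HuU), wf_recv_inv in W2 as [Hne [Hnd Hb]].
    apply asub_recv_r.
    + eapply SendStep_wf; [eapply SendStepH_SendStep; exact HS | exact W1].
    + constructor.
      * eapply Forall2_nonnil; eauto.
      * rewrite <- (Forall2_br_labels _ _ _ Hws'); [auto | tauto].
      * intros m bm V Hin. destruct (Forall2_in_r _ _ _ Hws' _ Hin) as [w [_ [_ [_ [Y [_ AY]]]]]].
        exact (proj2 (asub_wf _ _ _ AY)).
    + intros m bm V Hin. destruct (Forall2_in_r _ _ _ Hws' _ Hin) as [w [_ [E [_ [Y [RY AY]]]]]].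
      simpl in *. rewrite E in RY. eauto.
Qed.
End SendStepTransfer.

Lemma asub_SendStepH Th p l b : forall h, transfers_SendStepH Th p l b h.
Proof.
  induction h as [h IHh] using lt_wf_ind. intros T T' HS U HTU.
  inversion HS as [? bs V Hin | n q bsI bsJ bs' Hpq Hincl Hnd Hne HF | n q bs bs' HF | n V U0 HS'];
    subst.
  - destruct (asub_gen_asub _ _ _ HTU) as [_ [_ [Hsend _]]]. eapply Hsend; eauto. apply Unf_send.
  - eapply asub_SendStepH_send; eauto.
  - destruct (asub_gen_asub _ _ _ HTU) as [_ [_ [_ [Hrecvs _]]]].
    destruct (Recvs_RecvsH _ _ (Hrecvs _ _ (Unf_recv _ _))) as [g Hg].
    eapply asub_SendStepH_recv; eauto.
  - apply (IHh n ltac:(lia) (open V (TRec V))); auto. apply asub_unfold_rec_l. auto.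
Qed.

Lemma asub_SendStep Th p l b T T' U : SendStep p l b T T' -> asub Th T U ->
  exists U', SendStep p l b U U' /\ asub Th T' U'.
Proof.
  intros H1 H2. destruct (SendStep_SendStepH _ _ _ _ _ H1) as [h Hh].
  eapply asub_SendStepH; eauto.
Qed.

Lemma asub_RecvStep Th p l b S T T' : RecvStep p l b T T' -> asub Th S T ->
  exists S', RecvStep p l b S S' /\ asub Th S' T'.
Proof.
  intros H1 H2. apply RecvStep_dual in H1. apply asub_dual in H2.
  destruct (asub_SendStep _ _ _ _ _ _ _ H1 H2) as [X [SX AX]].
  exists (dual X). split.
  - rewrite <- (dual_involutive S). apply SendStep_dual. auto.
  - apply asub_dual_iff. rewrite dual_involutive. auto.
Qed.

Lemma asub_trans Th S T U : asub Th S T -> asub Th T U -> asub Th S U.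
Proof.
  intros H1 H2.
  apply (asub_coind Th (fun a c => exists T, asub Th a T /\ asub Th T c)); [|eauto].
  clear. intros S U [T [H1 H2]].
  destruct (asub_gen_asub _ _ _ H1) as [W1 [_ [A1 [A2 [A3 [A4 A5]]]]]].
  destruct (asub_gen_asub _ _ _ H2) as [_ [V2 [B1 [B2 [B3 [B4 B5]]]]]].
  repeat split; auto.
  - intros p bs Hu l b Si Hin. destruct (A1 _ _ Hu _ _ _ Hin) as [Ti [STi ATi]].
    destruct (asub_SendStep _ _ _ _ _ _ _ STi H2) as [Ui [SUi AUi]]. eauto 6.
  - intros p bs Hu. eapply asub_Recvs; eauto.
  - intros p bs Hu. eapply asub_Sends; eauto.
  - intros p bs Hu l b Ui Hin. destruct (B4 _ _ Hu _ _ _ Hin) as [Ti [RTi ATi]].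
    destruct (asub_RecvStep _ _ _ _ _ _ _ RTi H1) as [Si [RSi ASi]]. eauto 6.
  - intros Hx. apply B5, A5; auto.
  - intros Hx. apply A5, B5; auto.
Qed.

(** * Substitution *)

Definition lc_subst (s : tvar -> styp) := forall x k u, open_rec k u (s x) = s x.

Lemma substf_open_rec s : lc_subst s ->
  forall V k u, substf s (open_rec k u V) = open_rec k (substf s u) (substf s V).
Proof.
  intros Hs V. induction V using styp_nested_ind; intros k u; auto.
  - rewrite open_rec_send, !substf_send, open_rec_send, !bmap_comp. f_equal.
    apply bmap_ext_in. intros l0 b0 V0 Hin. branch_IH H Hin. auto.
  - rewrite open_rec_recv, !substf_recv, open_rec_recv, !bmap_comp. f_equal.
    apply bmap_ext_in. intros l0 b0 V0 Hin. branch_IH H Hin. auto.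
  - simpl. rewrite Hs. auto.
  - simpl. destruct (Nat.eqb n k); auto.
  - simpl. f_equal. auto.
Qed.

Lemma unguarded_substf s : (forall x j, ~ unguarded j (s x)) ->
  forall V j, unguarded j (substf s V) -> unguarded j V.
Proof. intros Hs V. induction V; simpl; auto. intros j H. exfalso. eapply Hs; eauto. Qed.

Lemma wf_at_substf Th' Th s k A : wf_at Th' k A -> (forall x, Th' x -> wf Th (s x)) ->
  (forall x j, ~ unguarded j (s x)) -> wf_at Th k (substf s A).
Proof.
  induction 1; intros Hs Hg.
  - constructor.
  - simpl. eapply wf_at_weaken; [apply Hs; auto | lia].
  - constructor. auto.
  - rewrite substf_send. constructor.
    + apply bmap_nil_iff; auto.
    + rewrite bmap_labels; auto.
    + intros l b V Hin. apply in_bmap_iff in Hin as [V0 [Hin ->]]. eauto.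
  - rewrite substf_recv. constructor.
    + apply bmap_nil_iff; auto.
    + rewrite bmap_labels; auto.
    + intros l b V Hin. apply in_bmap_iff in Hin as [V0 [Hin ->]]. eauto.
  - simpl. constructor; auto. intros Hu. apply H0. eapply unguarded_substf; eauto.
Qed.

Lemma Unf_substf s : lc_subst s -> forall A A0, Unf A A0 ->
  forall Z, Unf (substf s A0) Z -> Unf (substf s A) Z.
Proof.
  intros Hs A A0 H. induction H; intros Z HZ; auto.
  simpl. constructor. unfold open. change (TRec (substf s V)) with (substf s (TRec V)).
  rewrite <- substf_open_rec; auto.
Qed.

Lemma substf_Unf s : lc_subst s -> forall A A0, Unf A A0 ->
  (forall x, A0 = TFVar x -> s x = TFVar x) -> Unf (substf s A) (substf s A0).
Proof.
  intros Hs A A0 H Hx. eapply Unf_substf; eauto.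
  destruct A0; simpl; try (apply unf_other; congruence).
  - rewrite (Hx t eq_refl). apply unf_other. congruence.
  - exfalso. eapply Unf_not_rec; eauto.
Qed.

Lemma SendStep_substf s : lc_subst s ->
  forall p l b T T', SendStep p l b T T' -> SendStep p l b (substf s T) (substf s T').
Proof.
  intros Hs p l b T T' H. induction H using SendStep_nested_ind.
  - rewrite substf_send. constructor. apply in_bmap. auto.
  - rewrite !substf_send. apply ss_send with (bmap (substf s) bsJ); auto.
    + apply incl_map; auto.
    + rewrite bmap_labels; auto.
    + apply bmap_nil_iff; auto.
    + apply (Forall2_bmap (fun x y => SendStep p l b (substf s x) (substf s y))); [|auto].
      eapply Forall2_impl; [|eauto]. simpl. tauto.
  - rewrite !substf_recv. constructor.
    apply (Forall2_bmap (fun x y => SendStep p l b (substf s x) (substf s y))); [|auto].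
    eapply Forall2_impl; [|eauto]. simpl. tauto.
  - simpl. constructor. unfold open in *. rewrite substf_open_rec in IHSendStep; auto.
Qed.

Lemma RecvStep_substf s : lc_subst s ->
  forall p l b T T', RecvStep p l b T T' -> RecvStep p l b (substf s T) (substf s T').
Proof.
  intros Hs p l b T T' H. induction H using RecvStep_nested_ind.
  - rewrite substf_recv. constructor. apply in_bmap. auto.
  - rewrite !substf_recv. apply rs_recv with (bmap (substf s) bsJ); auto.
    + apply incl_map; auto.
    + rewrite bmap_labels; auto.
    + apply bmap_nil_iff; auto.
    + apply (Forall2_bmap (fun x y => RecvStep p l b (substf s x) (substf s y))); [|auto].
      eapply Forall2_impl; [|eauto]. simpl. tauto.
  - rewrite !substf_send. constructor.
    apply (Forall2_bmap (fun x y => RecvStep p l b (substf s x) (substf s y))); [|auto].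
    eapply Forall2_impl; [|eauto]. simpl. tauto.
  - simpl. constructor. unfold open in *. rewrite substf_open_rec in IHRecvStep; auto.
Qed.

Lemma Sends_substf s p T : Sends p T -> Sends p (substf s T).
Proof.
  induction 1.
  - rewrite substf_send. constructor.
  - rewrite substf_send. apply sends_send.
    intros l b V Hin. apply in_bmap_iff in Hin as [V0 [Hin ->]]. eauto.
  - simpl. constructor. auto.
Qed.

Lemma Recvs_substf s p T : Recvs p T -> Recvs p (substf s T).
Proof.
  induction 1.
  - rewrite substf_recv. constructor.
  - rewrite substf_recv. apply recvs_recv.
    intros l b V Hin. apply in_bmap_iff in Hin as [V0 [Hin ->]]. eauto.
  - simpl. constructor. auto.
Qed.

Lemma substf_eq_send s A p bs : (forall x, A = TFVar x -> s x = TFVar x) ->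
  substf s A = TSend p bs -> exists bs0, A = TSend p bs0 /\ bs = bmap (substf s) bs0.
Proof.
  intros Hx E. destruct A; simpl in E; try discriminate.
  - inversion E; subst. eauto.
  - rewrite (Hx t eq_refl) in E. discriminate.
Qed.

Lemma substf_eq_recv s A p bs : (forall x, A = TFVar x -> s x = TFVar x) ->
  substf s A = TRecv p bs -> exists bs0, A = TRecv p bs0 /\ bs = bmap (substf s) bs0.
Proof.
  intros Hx E. destruct A; simpl in E; try discriminate.
  - inversion E; subst. eauto.
  - rewrite (Hx t eq_refl) in E. discriminate.
Qed.

Lemma substf_eq_fvar s A z : (forall x, A = TFVar x -> s x = TFVar x) ->
  substf s A = TFVar z -> A = TFVar z.
Proof.
  intros Hx E. destruct A; simpl in E; try discriminate.
  rewrite (Hx t eq_refl) in E. auto.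
Qed.

Section SubstSim.
Variables (Th' Th : tvar -> Prop) (s s' : tvar -> styp).
Hypothesis s_wf : forall x, Th' x -> wf Th (s x) /\ wf Th (s' x).
Hypothesis s_id : forall x, ~ Th' x -> s x = TFVar x /\ s' x = TFVar x.

Definition subst_rel a c := exists A B, a = substf s A /\ c = substf s' B /\ asub Th' A B.
Let R a c := subst_rel a c \/ asub Th a c.

Lemma subst_lc : lc_subst s /\ lc_subst s'.
Proof.
  split; intros x k u; destruct (classic (Th' x)) as [Hx|Hx];
    try (rewrite (proj1 (s_id x Hx)) || rewrite (proj2 (s_id x Hx)); reflexivity);
    eapply wf_open_rec_id; apply s_wf; auto.
Qed.

Lemma subst_guarded : (forall x j, ~ unguarded j (s x)) /\ (forall x j, ~ unguarded j (s' x)).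
Proof.
  split; intros x j; destruct (classic (Th' x)) as [Hx|Hx];
    try (rewrite (proj1 (s_id x Hx)) || rewrite (proj2 (s_id x Hx)); simpl; auto);
    eapply wf_not_unguarded; apply s_wf; auto.
Qed.

Lemma wf_substf A : wf Th' A -> wf Th (substf s A) /\ wf Th (substf s' A).
Proof.
  intros H. split; eapply wf_at_substf; eauto; try apply subst_guarded;
    intros x Hx; apply s_wf; auto.
Qed.

Lemma asub_gen_substf A B A0 : asub Th' A B -> Unf A A0 ->
  (forall x, A0 = TFVar x -> s x = TFVar x /\ s' x = TFVar x) ->
  asub_gen Th R (substf s A) (substf s' B).
Proof.
  intros HAB HA0 Hx. destruct subst_lc as [Hlc Hlc'].
  destruct (asub_gen_asub _ _ _ HAB) as [W1 [W2 [S1 [S2 [S3 [S4 S5]]]]]].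
  destruct (Unf_exists _ _ W2) as [B0 HB0].
  assert (HxB : forall y, B0 = TFVar y -> s y = TFVar y /\ s' y = TFVar y).
  { intros y ->. assert (Hy : Th' y) by (eapply Unf_fvar_scope; eauto).
    apply Hx. eapply Unf_functional; [exact HA0|]. apply S5; auto. }
  assert (UA : Unf (substf s A) (substf s A0)) by (apply substf_Unf; auto; apply Hx).
  assert (UB : Unf (substf s' B) (substf s' B0)) by (apply substf_Unf; auto; apply HxB).
  repeat split; try apply wf_substf; auto.
  - intros p bs Hu l b Ti Hin. pose proof (Unf_functional _ _ UA _ Hu) as E.
    destruct (substf_eq_send _ _ _ _ (fun x e => proj1 (Hx x e)) E) as [bs0 [-> ->]].
    apply in_bmap_iff in Hin as [T0 [Hin ->]].
    destruct (S1 _ _ HA0 _ _ _ Hin) as [U0 [SU0 AU0]].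
    exists (substf s' U0). split; [apply SendStep_substf; auto | left; exists T0, U0; auto].
  - intros p bs Hu. pose proof (Unf_functional _ _ UA _ Hu) as E.
    destruct (substf_eq_recv _ _ _ _ (fun x e => proj1 (Hx x e)) E) as [bs0 [-> ->]].
    apply Recvs_substf. eauto.
  - intros p bs Hu. pose proof (Unf_functional _ _ UB _ Hu) as E.
    destruct (substf_eq_send _ _ _ _ (fun x e => proj2 (HxB x e)) E) as [bs0 [-> ->]].
    apply Sends_substf. eauto.
  - intros p bs Hu l b Ui Hin. pose proof (Unf_functional _ _ UB _ Hu) as E.
    destruct (substf_eq_recv _ _ _ _ (fun x e => proj2 (HxB x e)) E) as [bs0 [-> ->]].
    apply in_bmap_iff in Hin as [U0 [Hin ->]].
    destruct (S4 _ _ HB0 _ _ _ Hin) as [T0 [RT0 AT0]].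
    exists (substf s T0). split; [apply RecvStep_substf; auto | left; exists T0, U0; auto].
  - intros Hz. pose proof (Unf_functional _ _ UA _ Hz) as E.
    apply substf_eq_fvar in E; [|intros; apply Hx; auto]. subst A0.
    assert (HB : Unf B (TFVar X)) by (apply S5; [apply (Unf_fvar_scope _ _ _ W1 HA0) | auto]).
    pose proof (Unf_functional _ _ HB0 _ HB); subst B0.
    simpl in UB. rewrite (proj2 (Hx X eq_refl)) in UB. auto.
  - intros Hz. pose proof (Unf_functional _ _ UB _ Hz) as E.
    apply substf_eq_fvar in E; [|intros; apply HxB; auto]. subst B0.
    assert (HA : Unf A (TFVar X)) by (apply S5; [apply (Unf_fvar_scope _ _ _ W2 HB0) | auto]).
    pose proof (Unf_functional _ _ HA0 _ HA); subst A0.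
    simpl in UA. rewrite (proj1 (HxB X eq_refl)) in UA. auto.
Qed.

Lemma asub_gen_substf_var A B x : asub Th' A B -> Unf A (TFVar x) ->
  asub_gen Th R (s x) (s' x) -> asub_gen Th R (substf s A) (substf s' B).
Proof.
  intros HAB HA HS. destruct subst_lc as [Hlc Hlc'].
  destruct (asub_gen_asub _ _ _ HAB) as [W1 [W2 [_ [_ [_ [_ S5]]]]]].
  assert (Hx : Th' x) by apply (Unf_fvar_scope _ _ _ W1 HA).
  assert (HB : Unf B (TFVar x)) by (apply S5; auto).
  destruct (s_wf x Hx) as [Wx Wx'].
  destruct (Unf_exists _ _ Wx) as [Z HZ]. destruct (Unf_exists _ _ Wx') as [Z' HZ'].
  apply (asub_gen_Unf Th _ (s x) (substf s A) (s' x) (substf s' B) Z Z'); auto;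
    try (eapply Unf_substf; eauto); apply wf_substf; auto.
Qed.

Lemma asub_substf :
  (forall x, Th' x -> (s x = TFVar x /\ s' x = TFVar x) \/ asub_gen Th R (s x) (s' x)) ->
  forall A B, asub Th' A B -> asub Th (substf s A) (substf s' B).
Proof.
  intros Hvar A B HAB. apply (asub_coind Th subst_rel); [|exists A, B; auto].
  intros a c [A' [B' [-> [-> H]]]].
  destruct (Unf_exists _ _ (proj1 (asub_wf _ _ _ H))) as [A0 HA0].
  destruct (classic (exists x, A0 = TFVar x /\ ~ (s x = TFVar x /\ s' x = TFVar x)))
    as [[x [-> Hx]]|Hno].
  - apply asub_gen_substf_var with x; auto.
    destruct (Hvar x) as [?|?]; [|tauto|auto].
    eapply Unf_fvar_scope, HA0. apply (asub_wf _ _ _ H).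
  - apply asub_gen_substf with A0; auto.
    intros x ->. apply NNPP. intros Hn. eauto.
Qed.
End SubstSim.

Lemma msub_var_in n X Ts Us x : (exists k, k < n /\ X k = x) ->
  exists j, j < n /\ msub_var n X Ts x = Ts j /\ msub_var n X Us x = Us j.
Proof.
  induction n; intros [k [Hk Ek]]; [lia|]. simpl.
  destruct (Nat.eqb_spec (X n) x); [exists n; auto|].
  destruct IHn as [j [Hj E]]; [exists k; split; auto; assert (k <> n) by congruence; lia|].
  exists j. split; auto.
Qed.

Lemma msub_var_notin n X Ts x : ~ (exists k, k < n /\ X k = x) -> msub_var n X Ts x = TFVar x.
Proof.
  induction n; simpl; intros Hx; auto.
  destruct (Nat.eqb_spec (X n) x); [exfalso; apply Hx; exists n; auto|].
  apply IHn. intros [k [Hk Ek]]. apply Hx. exists k. split; auto.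
Qed.

Lemma asub_msubst Th n X Ts Us T U :
  asub (fun Y => exists k, k < n /\ X k = Y) T U ->
  (forall k, k < n -> asub Th (Ts k) (Us k)) ->
  asub Th (msubst n X Ts T) (msubst n X Us U).
Proof.
  intros HTU HK. apply (asub_substf (fun Y => exists k, k < n /\ X k = Y)); auto.
  - intros x Hx. destruct (msub_var_in n X Ts Us x Hx) as [j [Hj [-> ->]]]. apply asub_wf; auto.
  - intros x Hx. rewrite !msub_var_notin; auto.
  - intros x Hx. right. destruct (msub_var_in n X Ts Us x Hx) as [j [Hj [-> ->]]].
    apply (asub_gen_mono Th (asub Th)); auto. apply asub_gen_asub. auto.
Qed.

Lemma open_rec_close_rec Th k T : wf_at Th k T -> forall X u,
  open_rec k u (close_rec k X T) = substf (fun y => if Nat.eqb y X then u else TFVar y) T.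
Proof.
  induction 1; intros X u.
  - reflexivity.
  - simpl. destruct (Nat.eqb x X); simpl; auto. rewrite Nat.eqb_refl. auto.
  - simpl. destruct (Nat.eqb_spec n k); auto. lia.
  - rewrite close_rec_send, open_rec_send, substf_send, bmap_comp.
    f_equal. apply bmap_ext_in. eauto.
  - rewrite close_rec_recv, open_rec_recv, substf_recv, bmap_comp.
    f_equal. apply bmap_ext_in. eauto.
  - simpl. f_equal. auto.
Qed.

Lemma Unf_mu_iff Th X T Z : wf Th T ->
  Unf (mu X T) Z <-> Unf (substf (fun y => if Nat.eqb y X then mu X T else TFVar y) T) Z.
Proof.
  intros Hw. unfold mu at 1. unfold open. split; intros H.
  - inversion H; subst; [|exfalso; eapply H0; eauto].
    unfold open in H1. erewrite <- open_rec_close_rec; eauto.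
  - constructor. unfold open. erewrite open_rec_close_rec; eauto.
Qed.

Lemma wf_mu_body_not_Unf_var Th Th' X T : wf Th (mu X T) -> wf Th' T -> ~ Unf T (TFVar X).
Proof.
  intros Hmu Hw HH. inversion Hmu as [| | | | |? ? _ Hg]; subst.
  apply Hg, close_rec_core_unguarded. eapply Unf_fvar_rec_core; eauto.
Qed.

Lemma asub_mu Th X T U : ~ Th X -> asub (fun Y => Th Y \/ Y = X) T U ->
  wf Th (mu X T) -> wf Th (mu X U) -> asub Th (mu X T) (mu X U).
Proof.
  intros HX HTU WT WU. destruct (asub_wf _ _ _ HTU) as [WT' WU'].
  set (Th' := fun Y => Th Y \/ Y = X) in *.
  set (s := fun y => if Nat.eqb y X then mu X T else TFVar y).
  set (s' := fun y => if Nat.eqb y X then mu X U else TFVar y).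
  assert (s_wf : forall x, Th' x -> wf Th (s x) /\ wf Th (s' x)).
  { intros x [Hx|Hx]; unfold s, s'; destruct (Nat.eqb_spec x X); subst; try tauto.
    split; constructor; auto. }
  assert (s_id : forall x, ~ Th' x -> s x = TFVar x /\ s' x = TFVar x).
  { intros x Hx. unfold s, s'. destruct (Nat.eqb_spec x X); [exfalso; apply Hx; right|]; auto. }
  replace (mu X T) with (substf s (TFVar X)) by (unfold s, s'; simpl; rewrite Nat.eqb_refl; auto).
  replace (mu X U) with (substf s' (TFVar X)) by (unfold s, s'; simpl; rewrite Nat.eqb_refl; auto).
  apply (asub_substf Th'); auto; [|apply asub_refl; constructor; right; auto].
  intros x Hx. unfold s, s'. destruct (Nat.eqb_spec x X) as [->|]; [right|left; auto].
  destruct (Unf_exists _ _ WT') as [T0 HT0].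
  destruct (Unf_exists _ _ (proj1 (wf_substf Th' Th s s' s_wf s_id T WT'))) as [Z HZ].
  destruct (Unf_exists _ _ (proj2 (wf_substf Th' Th s s' s_wf s_id U WU'))) as [Z' HZ'].
  apply (asub_gen_Unf Th _ (substf s T) _ (substf s' U) _ Z Z'); auto.
  - apply (Unf_mu_iff Th'); auto.
  - apply (Unf_mu_iff Th'); auto.
  - apply (asub_gen_substf Th' Th s s' s_wf s_id T U T0); auto.
    intros y ->. unfold s, s'.
    destruct (Nat.eqb_spec y X) as [->|]; [|auto].
    exfalso. exact (wf_mu_body_not_Unf_var _ _ _ _ WT WT' HT0).
Qed.

Theorem lemma1 :
  (* (i) reflexivity *)
  (forall (Theta : tvar -> Prop) (T : styp), wf Theta T -> asub Theta T T) /\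
  (* (ii) transitivity *)
  (forall (Theta : tvar -> Prop) (S T U : styp),
      asub Theta S T -> asub Theta T U -> asub Theta S U) /\
  (* (iii) internal choice *)
  (forall (Theta : tvar -> Prop) (p : participant) (I J : list nat)
          (l : nat -> label) (b : nat -> ground) (T U : nat -> styp),
      incl J I ->
      wf Theta (TSend p (branches J l b T)) ->
      wf Theta (TSend p (branches I l b U)) ->
      (forall i, In i J -> asub Theta (T i) (U i)) ->
      asub Theta (TSend p (branches J l b T)) (TSend p (branches I l b U))) /\
  (* (iv) external choice *)
  (forall (Theta : tvar -> Prop) (p : participant) (I J : list nat)
          (l : nat -> label) (b : nat -> ground) (T U : nat -> styp),
      incl J I ->
      wf Theta (TRecv p (branches I l b T)) ->
      wf Theta (TRecv p (branches J l b U)) ->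
      (forall i, In i J -> asub Theta (T i) (U i)) ->
      asub Theta (TRecv p (branches I l b T)) (TRecv p (branches J l b U))) /\
  (* (v) recursion *)
  (forall (Theta : tvar -> Prop) (X : tvar) (T U : styp),
      ~ Theta X ->
      asub (fun Y => Theta Y \/ Y = X) T U ->
      wf Theta (mu X T) -> wf Theta (mu X U) ->
      asub Theta (mu X T) (mu X U)) /\
  (* (vi) substitution *)
  (forall (Theta : tvar -> Prop) (n : nat) (X : nat -> tvar) (Ts Us : nat -> styp) (T U : styp),
      (forall i j, i < n -> j < n -> X i = X j -> i = j) ->
      asub (fun Y => exists k, k < n /\ X k = Y) T U ->
      (forall k, k < n -> asub Theta (Ts k) (Us k)) ->
      wf Theta (msubst n X Ts T) -> wf Theta (msubst n X Us U) ->
      asub Theta (msubst n X Ts T) (msubst n X Us U)).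
Proof.
  split; [exact asub_refl|]. split; [exact asub_trans|].
  split; [exact asub_send_branches|]. split; [exact asub_recv_branches|].
  split; [intros; apply asub_mu; auto | intros; apply asub_msubst; auto].
Qed.
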